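(* Assume (C1) and (C2). Let $m_*:=\inf_{u\in\mathcal{M}}I(u)$ and $c_*:=\inf_{u\in\mathcal{N}}I(u)$. Then $m_*>0$ and $c_*>0$, and both infima are achieved: there exist $u_0\in\mathcal{M}$ with $I(u_0)=m_*$ and $\bar u\in\mathcal{N}$ with $I(\bar u)=c_*$.
   Context: Fix real numbers $p,q,r$ with $1<p<q$, $\frac p2$ a positive integer, and $r\ge1$, and functions $a,b,c:\mathbb{Z}\to(0,+\infty)$. Conditions: - (C1) There is $b_0>0$ with $b(n)\ge b_0$ for all $n$ and $b(n)\to+\infty$ as $|n|\to\infty$. - (C2) There is $c_0>0$ with $c(n)\le c_0$ for all $n$ and $\sum_n c(n)<+\infty$. Notation for a real sequence $u=(u(n))_{n\in\mathbb{Z}}$: $\Delta u(n)=u(n+1)-u(n)$, $u^+(n)=\max\{u(n),0\}$, $u^-(n)=\min\{u(n),0\}$. Spaces: - $E$ is the set of real sequences $u$ with $\|u\|:=\big(\sum_n[a(n)|\Delta u(n)|^p+b(n)|u(n)|^p]\big)^{1/p}<\infty$. - $\mathcal{D}=\{u\in E:\sum_n c(n)|u(n)|^q\ln|u(n)|^r<+\infty\}$, where terms with $u(n)=0$ are read as $0$. For $u,v\in\mathcal{D}$: - $I(u)=\frac1p\|u\|^p+\frac{r}{q^2}\sum_n c(n)|u(n)|^q-\frac1q\sum_n c(n)|u(n)|^q\ln|u(n)|^r$. - $\langle I'(u),v\rangle=\sum_n[a(n)|\Delta u(n)|^{p-2}\Delta u(n)\Delta v(n)+b(n)|u(n)|^{p-2}u(n)v(n)]-\sum_n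 c(n)|u(n)|^{q-2}u(n)v(n)\ln|u(n)|^r$. Sets: - $\mathcal{N}=\{u\in\mathcal{D}:u\ne0,\ \langle I'(u),u\rangle=0\}$. - $\mathcal{M}=\{u\in\mathcal{D}:u^+\ne0,\ u^-\neq0,\ \langle I'(u),u^+\rangle=0,\ \langle I'(u),u^-\rangle=0\}$. *)

From Stdlib Require Import Reals ZArith.
From Coquelicot Require Import Coquelicot.
Open Scope R_scope.

(* x^y for x >= 0, with the convention 0^y = 0 (Stdlib's Rpower 0 y = 1). *)
Definition rpow (x y : R) : R :=
  if Req_EM_T x 0 then 0 else Rpower x y.

Definition exZ (f : Z -> R) : Prop :=
  ex_series (fun n : nat => f (Z.of_nat n)) /\
  ex_series (fun n : nat => f (- Z.of_nat (S n))%Z).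

Definition sumZ (f : Z -> R) : R :=
  Series (fun n : nat => f (Z.of_nat n)) +
  Series (fun n : nat => f (- Z.of_nat (S n))%Z).

Definition Delta (u : Z -> R) (n : Z) : R := u (n + 1)%Z - u n.
Definition posp (u : Z -> R) : Z -> R := fun n => Rmax (u n) 0.
Definition negp (u : Z -> R) : Z -> R := fun n => Rmin (u n) 0.

(* ln |t|^r, read as ln (|t|^r); terms with t = 0 read as 0 *)
Definition lnabs (r t : R) : R := ln (rpow (Rabs t) r).

Definition normE_p (p : R) (a b : Z -> R) (u : Z -> R) : Z -> R :=
  fun n => a n * rpow (Rabs (Delta u n)) p + b n * rpow (Rabs (u n)) p.

Definition inE (p : R) (a b : Z -> R) (u : Z -> R) : Prop :=
  exZ (normE_p p a b u).

Definition normE (p : R) (a b : Z -> R) (u : Z -> R) : R :=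
  rpow (sumZ (normE_p p a b u)) (1 / p).

Definition logterm (q r : R) (c : Z -> R) (u : Z -> R) : Z -> R :=
  fun n => c n * rpow (Rabs (u n)) q * lnabs r (u n).

Definition inD (p q r : R) (a b c : Z -> R) (u : Z -> R) : Prop :=
  inE p a b u /\ exZ (fun n => Rabs (logterm q r c u n)).

Definition Ifun (p q r : R) (a b c : Z -> R) (u : Z -> R) : R :=
  1 / p * rpow (normE p a b u) p
  + r / (q ^ 2) * sumZ (fun n => c n * rpow (Rabs (u n)) q)
  - 1 / q * sumZ (logterm q r c u).

Definition dI (p q r : R) (a b c : Z -> R) (u v : Z -> R) : R :=
  sumZ (fun n => a n * rpow (Rabs (Delta u n)) (p - 2) * Delta u n * Delta v n
               + b n * rpow (Rabs (u n)) (p - 2) * u n * v n)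
  - sumZ (fun n => c n * rpow (Rabs (u n)) (q - 2) * u n * v n * lnabs r (u n)).

Definition Nset (p q r : R) (a b c : Z -> R) (u : Z -> R) : Prop :=
  inD p q r a b c u /\ u <> (fun _ => 0) /\ dI p q r a b c u u = 0.

Definition Mset (p q r : R) (a b c : Z -> R) (u : Z -> R) : Prop :=
  inD p q r a b c u /\ posp u <> (fun _ => 0) /\ negp u <> (fun _ => 0) /\
  dI p q r a b c u (posp u) = 0 /\ dI p q r a b c u (negp u) = 0.

Definition condC1 (b : Z -> R) : Prop :=
  (exists b0, 0 < b0 /\ forall n, b0 <= b n) /\
  (forall M, exists N : Z, forall n, (N < Z.abs n)%Z -> M < b n).

Definition condC2 (c : Z -> R) : Prop :=
  (exists c0, 0 < c0 /\ forall n, c n <= c0) /\ exZ c.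

(* Since p = 2k is even, every power of |u| of exponent p or p - 2 is a polynomial power, and on the
   Nehari-type sets the identity <I'(u), v> = 0 eliminates the logarithmic sum, so that I equals
   Ired u = (1/p - 1/q) ||u||^p + (r/q^2) sum c |u|^q.  We minimize Ired over the relaxed sets in which
   the Nehari identities are only required as inequalities "energy part <= logarithmic part".
   A minimizing sequence is bounded in E, hence uniformly bounded pointwise because b >= b0, and a
   diagonal argument extracts a pointwise limit.  Fatou's lemma for the energy terms and dominated
   convergence for the c-weighted terms (c is summable) keep the limit in the relaxed set with
   Ired no larger than the infimum; the bound b0 <= (logarithmic part) passes to the limit and keeps
   the relevant parts of the limit nonzero.  A minimizer satisfies the identities with equality:
   otherwise scaling its positive part (or, for N, the whole function) by some s < 1 close to 1 stays
   in the relaxed set and strictly decreases Ired. *)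

From Pilot Require Import Defs.
From Stdlib Require Import Reals ZArith Lra Lia ClassicalEpsilon FunctionalExtensionality.
From Coquelicot Require Import Coquelicot.
Open Scope R_scope.

(** * Series over [nat] and [Z] *)

Lemma is_lim_seq_le_finite (u v : nat -> R) (lu lv : R) :
  (forall n, u n <= v n) -> is_lim_seq u lu -> is_lim_seq v lv -> lu <= lv.
Proof. intros H Hu Hv. exact (is_lim_seq_le u v lu lv H Hu Hv). Qed.

Lemma is_lim_seq_ge_const (u : nat -> R) (m l : R) : (forall n, m <= u n) -> is_lim_seq u l -> m <= l.
Proof. intros H Hu. apply (is_lim_seq_le_finite (fun _ => m) u); auto using is_lim_seq_const. Qed.

Lemma sum_n_succ (g : nat -> R) N : sum_n g (S N) = sum_n g N + g (S N).
Proof. exact (sum_Sn g N). Qed.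

Lemma sum_n_nonneg (g : nat -> R) N : (forall i, 0 <= g i) -> 0 <= sum_n g N.
Proof.
  intros Hg; induction N as [|N IH].
  - rewrite sum_O; apply Hg.
  - rewrite sum_n_succ; specialize (Hg (S N)); lra.
Qed.

Lemma sum_n_le_pointwise (f g : nat -> R) N : (forall i, f i <= g i) -> sum_n f N <= sum_n g N.
Proof.
  intros Hfg; induction N as [|N IH].
  - rewrite !sum_O; apply Hfg.
  - rewrite !sum_n_succ; specialize (Hfg (S N)); lra.
Qed.

Lemma term_le_sum_n (g : nat -> R) N : (forall i, 0 <= g i) -> g N <= sum_n g N.
Proof.
  intros Hg; destruct N as [|N].
  - rewrite sum_O; lra.
  - rewrite sum_n_succ; pose proof (sum_n_nonneg g N Hg); lra.
Qed.

Lemma sum_n_le_Series (g : nat -> R) N :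
  (forall i, 0 <= g i) -> ex_series g -> sum_n g N <= Series g.
Proof.
  intros Hg Hex. apply (is_lim_seq_incr_compare (sum_n g)); [apply Series_correct, Hex|].
  intros n; rewrite sum_n_succ; specialize (Hg (S n)); lra.
Qed.

Lemma ex_series_nonneg_bounded (g : nat -> R) M :
  (forall i, 0 <= g i) -> (forall N, sum_n g N <= M) -> ex_series g.
Proof.
  intros Hg HM. destruct (ex_finite_lim_seq_incr (sum_n g) M) as [l Hl]; auto.
  - intros n; rewrite sum_n_succ; specialize (Hg (S n)); lra.
  - exists l; exact Hl.
Qed.

Lemma Series_tail_dominated (f g : nat -> R) N :
  (forall i, Rabs (f i) <= g i) -> ex_series g ->
  Rabs (Series f - sum_n f N) <= Series g - sum_n g N.
Proof.
  intros Hfg Hg.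
  assert (Hf : ex_series f).
  { apply (@ex_series_le R_AbsRing R_CompleteNormedModule f g); auto. }
  assert (Hstep : forall M, (N <= M)%nat -> Rabs (sum_n f M - sum_n f N) <= sum_n g M - sum_n g N).
  { intros M HNM; induction HNM as [|M _ IH].
    - rewrite Rminus_diag, Rabs_R0; lra.
    - rewrite !sum_n_succ. specialize (Hfg (S M)).
      replace (sum_n f M + f (S M) - sum_n f N) with ((sum_n f M - sum_n f N) + f (S M)) by ring.
      eapply Rle_trans; [apply Rabs_triang|lra]. }
  assert (Lf : is_lim_seq (sum_n f) (Series f)) by apply (Series_correct _ Hf).
  assert (Lg : is_lim_seq (sum_n g) (Series g)) by apply (Series_correct _ Hg).
  apply (is_lim_seq_incr_n _ N) in Lf. apply (is_lim_seq_incr_n _ N) in Lg.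
  apply (is_lim_seq_le_finite _ _ _ _ (fun M => Hstep (M + N)%nat ltac:(lia))).
  - apply (is_lim_seq_abs _ (Series f - sum_n f N)), is_lim_seq_minus'; auto. apply is_lim_seq_const.
  - apply is_lim_seq_minus'; auto. apply is_lim_seq_const.
Qed.

Lemma is_lim_seq_sum_n (h : nat -> nat -> R) (l : nat -> R) N :
  (forall i, is_lim_seq (fun j => h j i) (l i)) -> is_lim_seq (fun j => sum_n (h j) N) (sum_n l N).
Proof.
  intros Hl; induction N as [|N IH].
  - rewrite sum_O. apply (is_lim_seq_ext (fun j => h j 0%nat)); auto.
    intros; rewrite sum_O; auto.
  - rewrite sum_n_succ. apply (is_lim_seq_ext (fun j => sum_n (h j) N + h j (S N))).
    + intros; rewrite sum_n_succ; auto.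
    + apply is_lim_seq_plus'; auto.
Qed.

Lemma Series_finite_support (g : nat -> R) N :
  (forall i, (N < i)%nat -> g i = 0) -> ex_series g /\ Series g = sum_n g N.
Proof.
  intros H0.
  assert (Hs : is_series g (sum_n g N)).
  { change (is_lim_seq (sum_n g) (sum_n g N)).
    apply (is_lim_seq_ext_loc (fun _ => sum_n g N)); [|apply is_lim_seq_const].
    exists N. intros M HM; induction HM as [|M HM IH]; auto.
    rewrite sum_n_succ, H0 by lia. rewrite Rplus_0_r; exact IH. }
  split; [exists (sum_n g N); exact Hs|apply is_series_unique, Hs].
Qed.

Definition right_half (f : Z -> R) : nat -> R := fun n => f (Z.of_nat n).
Definition left_half (f : Z -> R) : nat -> R := fun n => f (- Z.of_nat (S n))%Z.
Definition partial_sumZ (f : Z -> R) (N : nat) : R :=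
  sum_n (right_half f) N + sum_n (left_half f) N.

Lemma partial_sumZ_scal x f N : partial_sumZ (fun n => x * f n) N = x * partial_sumZ f N.
Proof.
  assert (Hscal : forall g : nat -> R, @eq R (sum_n (fun i => x * g i) N) (x * sum_n g N)).
  { intros g; induction N as [|N IH]; [rewrite !sum_O; auto|rewrite !sum_n_succ, IH; ring]. }
  unfold partial_sumZ, right_half, left_half. rewrite !Hscal. ring.
Qed.

Lemma is_lim_partial_sumZ f : exZ f -> is_lim_seq (partial_sumZ f) (sumZ f).
Proof. intros [H1 H2]. apply is_lim_seq_plus'; apply Series_correct; auto. Qed.

Lemma exZ_ext f g : (forall n, f n = g n) -> exZ f -> exZ g.
Proof.
  intros H [H1 H2]; split; [apply (ex_series_ext (right_half f))|apply (ex_series_ext (left_half f))];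
  auto; intros; apply H.
Qed.

Lemma sumZ_ext f g : (forall n, f n = g n) -> sumZ f = sumZ g.
Proof. intros H; unfold sumZ; f_equal; apply Series_ext; auto. Qed.

Lemma exZ_plus f g : exZ f -> exZ g -> exZ (fun n => f n + g n).
Proof. intros [H1 H2] [H3 H4]; split; [exact (ex_series_plus _ _ H1 H3)|exact (ex_series_plus _ _ H2 H4)]. Qed.

Lemma sumZ_plus f g : exZ f -> exZ g -> sumZ (fun n => f n + g n) = sumZ f + sumZ g.
Proof. intros [H1 H2] [H3 H4]. unfold sumZ. rewrite (Series_plus _ _ H1 H3), (Series_plus _ _ H2 H4). ring. Qed.

Lemma exZ_scal x f : exZ f -> exZ (fun n => x * f n).
Proof. intros [H1 H2]; split; [exact (ex_series_scal_l x _ H1)|exact (ex_series_scal_l x _ H2)]. Qed.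

Lemma sumZ_scal x f : sumZ (fun n => x * f n) = x * sumZ f.
Proof.
  unfold sumZ. rewrite (Series_scal_l x (fun n : nat => f (Z.of_nat n))),
    (Series_scal_l x (fun n : nat => f (- Z.of_nat (S n))%Z)). ring.
Qed.

Lemma sumZ_0 f : (forall n, f n = 0) -> sumZ f = 0.
Proof. intros H. rewrite (sumZ_ext f (fun n => 0 * f n)), sumZ_scal by (intros; rewrite H; ring). ring. Qed.

Lemma exZ_dom f g : (forall n, Rabs (f n) <= g n) -> exZ g -> exZ f.
Proof.
  intros H [H1 H2]; split; apply (@ex_series_le R_AbsRing R_CompleteNormedModule _ _ (fun i => H _)); auto.
Qed.

Lemma exZ_0 : exZ (fun _ => 0).
Proof. split; apply (Series_finite_support _ 0); auto. Qed.

Lemma exZ_le f g : (forall n, 0 <= f n <= g n) -> exZ g -> exZ f.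
Proof. intros H; apply exZ_dom. intros n; destruct (H n); rewrite Rabs_right; lra. Qed.

Lemma sumZ_le f g : (forall n, f n <= g n) -> exZ f -> exZ g -> sumZ f <= sumZ g.
Proof.
  intros H Hf Hg. apply (is_lim_seq_le_finite (partial_sumZ f) (partial_sumZ g));
    [|apply is_lim_partial_sumZ; auto..].
  intros N; apply Rplus_le_compat; apply sum_n_le_pointwise; intros; apply H.
Qed.

Lemma partial_sumZ_le_sumZ f N : (forall n, 0 <= f n) -> exZ f -> partial_sumZ f N <= sumZ f.
Proof.
  intros H [H1 H2]. unfold partial_sumZ, sumZ.
  pose proof (sum_n_le_Series (right_half f) N (fun i => H (Z.of_nat i)) H1).
  pose proof (sum_n_le_Series (left_half f) N (fun i => H (- Z.of_nat (S i))%Z) H2).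
  unfold right_half, left_half in *; lra.
Qed.

Lemma sumZ_nonneg f : (forall n, 0 <= f n) -> exZ f -> 0 <= sumZ f.
Proof.
  intros H Hf. eapply Rle_trans; [|apply (partial_sumZ_le_sumZ f 0 H Hf)].
  apply Rplus_le_le_0_compat; apply sum_n_nonneg; intros; apply H.
Qed.

Lemma term_le_sumZ f n0 : (forall n, 0 <= f n) -> exZ f -> f n0 <= sumZ f.
Proof.
  intros H Hf.
  assert (Hhalves : forall i, right_half f i <= sumZ f /\ left_half f i <= sumZ f).
  { intros i. pose proof (partial_sumZ_le_sumZ f i H Hf). unfold partial_sumZ in *.
    pose proof (term_le_sum_n (right_half f) i (fun _ => H _)).
    pose proof (term_le_sum_n (left_half f) i (fun _ => H _)).
    pose proof (sum_n_nonneg (right_half f) i (fun _ => H _)).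
    pose proof (sum_n_nonneg (left_half f) i (fun _ => H _)). lra. }
  destruct (Z_le_gt_dec 0 n0).
  - replace n0 with (Z.of_nat (Z.to_nat n0)) by lia. apply Hhalves.
  - replace n0 with (- Z.of_nat (S (Z.to_nat (- n0 - 1))))%Z by lia. apply Hhalves.
Qed.

Lemma sumZ_lt f g n0 :
  (forall n, f n <= g n) -> f n0 < g n0 -> exZ f -> exZ g -> sumZ f < sumZ g.
Proof.
  intros Hfg Hn0 Hf Hg.
  assert (Hd : exZ (fun n => g n - f n)).
  { apply (exZ_ext (fun n => g n + (-1) * f n)); [intros; ring|apply exZ_plus, exZ_scal; auto]. }
  assert (Hpos : forall n, 0 <= g n - f n) by (intros n; specialize (Hfg n); lra).
  pose proof (term_le_sumZ _ n0 Hpos Hd).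
  rewrite (sumZ_ext g (fun n => f n + (g n - f n))), sumZ_plus by (auto; intros; ring). lra.
Qed.

Lemma sumZ_finite_support f N :
  (forall n, (n < - Z.of_nat (S N) \/ Z.of_nat N < n)%Z -> f n = 0) ->
  exZ f /\ sumZ f = partial_sumZ f N.
Proof.
  intros H0.
  destruct (Series_finite_support (right_half f) N) as [E1 S1]; [intros i Hi; apply H0; lia|].
  destruct (Series_finite_support (left_half f) N) as [E2 S2]; [intros i Hi; apply H0; lia|].
  split; [split; auto|]. unfold sumZ, partial_sumZ. rewrite <- S1, <- S2. reflexivity.
Qed.

Lemma fatou_sumZ (f : nat -> Z -> R) (g : Z -> R) (K : nat -> R) (Kl : R) :
  (forall j n, 0 <= f j n) -> (forall n, is_lim_seq (fun j => f j n) (g n)) ->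
  (forall j, exZ (f j)) -> (forall j, sumZ (f j) <= K j) -> is_lim_seq K Kl ->
  exZ g /\ sumZ g <= Kl.
Proof.
  intros H0 Hl Hex HK HKl.
  assert (Hg0 : forall n, 0 <= g n).
  { intros n. apply (is_lim_seq_le_finite (fun _ => 0) _ _ _ (fun j => H0 j n));
      [apply is_lim_seq_const|apply Hl]. }
  assert (Hpart : forall N, partial_sumZ g N <= Kl).
  { intros N. apply (is_lim_seq_le_finite (fun j => partial_sumZ (f j) N) K); auto.
    - intros j; eapply Rle_trans; [apply partial_sumZ_le_sumZ|apply HK]; auto.
    - apply is_lim_seq_plus'; apply is_lim_seq_sum_n; intros; apply Hl. }
  assert (Hg : exZ g).
  { split; apply (ex_series_nonneg_bounded _ Kl); try (intros; apply Hg0); intros N;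
      specialize (Hpart N); unfold partial_sumZ in Hpart;
      pose proof (sum_n_nonneg (right_half g) N (fun _ => Hg0 _));
      pose proof (sum_n_nonneg (left_half g) N (fun _ => Hg0 _)); unfold right_half, left_half in *; lra. }
  split; auto.
  apply (is_lim_seq_le_finite _ (fun _ => Kl) _ _ Hpart);
    [apply is_lim_partial_sumZ; auto|apply is_lim_seq_const].
Qed.

Lemma Series_dominated_convergence (f : nat -> nat -> R) (g G : nat -> R) :
  (forall j i, Rabs (f j i) <= G i) -> ex_series G ->
  (forall i, is_lim_seq (fun j => f j i) (g i)) ->
  is_lim_seq (fun j => Series (f j)) (Series g).
Proof.
  intros HG HexG Hl.
  assert (Hg : forall i, Rabs (g i) <= G i).
  { intros i. apply (is_lim_seq_le_finite _ (fun _ => G i) _ _ (fun j => HG j i));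
      [exact (is_lim_seq_abs _ _ (Hl i))|apply is_lim_seq_const]. }
  apply is_lim_seq_spec. intros eps.
  assert (He3 : 0 < eps / 3) by (destruct eps; simpl; lra).
  assert (LG : is_lim_seq (sum_n G) (Series G)) by apply (Series_correct _ HexG).
  destruct (proj2 (is_lim_seq_spec _ _) LG (mkposreal _ He3)) as [N HN].
  specialize (HN N (le_n N)); simpl in HN.
  destruct (proj2 (is_lim_seq_spec _ _) (is_lim_seq_sum_n f g N Hl) (mkposreal _ He3)) as [J HJ].
  exists J. intros j Hj. specialize (HJ j Hj); simpl in HJ.
  pose proof (Series_tail_dominated (f j) G N (HG j) HexG) as Tf.
  pose proof (Series_tail_dominated g G N Hg HexG) as Tg.
  rewrite Rabs_minus_sym in HN. pose proof (Rle_abs (Series G - sum_n G N)).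
  replace (Series (f j) - Series g) with
    ((Series (f j) - sum_n (f j) N) + (sum_n (f j) N - sum_n g N) - (Series g - sum_n g N)) by ring.
  eapply Rle_lt_trans; [apply Rabs_triang|]. rewrite Rabs_Ropp.
  pose proof (Rabs_triang (Series (f j) - sum_n (f j) N) (sum_n (f j) N - sum_n g N)). lra.
Qed.

Lemma dominated_convergence_sumZ (f : nat -> Z -> R) (g G : Z -> R) :
  (forall j n, Rabs (f j n) <= G n) -> exZ G -> (forall n, is_lim_seq (fun j => f j n) (g n)) ->
  is_lim_seq (fun j => sumZ (f j)) (sumZ g).
Proof.
  intros HG [HG1 HG2] Hl. apply is_lim_seq_plus';
    apply (Series_dominated_convergence _ _ _ (fun j i => HG j _)); auto; intros; apply Hl.
Qed.

(** * Diagonal extraction *)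

Lemma inv_succ_pos (j : nat) : 0 < / (INR j + 1).
Proof. apply Rinv_0_lt_compat; pose proof (pos_INR j); lra. Qed.

Lemma inv_succ_eventually_lt (eps : R) :
  0 < eps -> exists N : nat, forall j, (N <= j)%nat -> / (INR j + 1) < eps.
Proof.
  intros He. destruct (archimed (/ eps)) as [Hup _].
  pose proof (Rinv_0_lt_compat eps He).
  exists (Z.to_nat (up (/ eps))). intros j Hj.
  assert (IZR (up (/ eps)) <= INR j).
  { apply le_INR in Hj. rewrite INR_IZR_INZ, Z2Nat.id in Hj; auto. apply le_IZR. lra. }
  rewrite <- (Rinv_inv eps). apply Rinv_lt_contravar; [|lra].
  apply Rmult_lt_0_compat; [auto|pose proof (pos_INR j); lra].
Qed.

Lemma is_lim_seq_inv_succ : is_lim_seq (fun j => / (INR j + 1)) 0.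
Proof.
  apply is_lim_seq_spec. intros eps. destruct (inv_succ_eventually_lt eps (cond_pos eps)) as [N HN].
  exists N. intros j Hj. rewrite Rminus_0_r, Rabs_right by (left; apply inv_succ_pos). auto.
Qed.

(* [Q eps k0 k] reads "k is admissible at precision eps beyond k0". *)
Lemma cluster_value_along (Q : R -> nat -> nat -> Prop) (y : nat -> R) (M : R) :
  (forall eps k0, 0 < eps -> exists k, Q eps k0 k) ->
  (forall eps eps' k0 k0' k, Q eps k0 k -> eps <= eps' -> (k0' <= k0)%nat -> Q eps' k0' k) ->
  (forall k, Rabs (y k) <= M) ->
  exists Y, forall eps k0, 0 < eps -> exists k, Q eps k0 k /\ Rabs (y k - Y) < eps.
Proof.
  intros Hne Hmono Hb.
  destruct (choice (fun j k => Q (/ (INR j + 1)) j k) (fun j => Hne _ j (inv_succ_pos j))) as [g Hg].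
  destruct (Bolzano_Weierstrass (fun j => y (g j)) (fun z => - M <= z <= M) (compact_P3 _ _)) as [l Hl].
  { intros n; apply Rabs_le_between, Hb. }
  exists l. intros eps k0 He.
  destruct (inv_succ_eventually_lt eps He) as [N HN].
  destruct (Hl (fun z => Rabs (z - l) < eps) (Nat.max N k0)) as [j [Hj Hv]].
  { exists (mkposreal eps He). intros z Hz. exact Hz. }
  exists (g j). split; auto. apply Hmono with (/ (INR j + 1)) j; auto; [left; apply HN|]; lia.
Qed.

Section Diagonal.
Variable x : nat -> Z -> R.
Variable M : R.
Hypothesis x_bounded : forall k n, Rabs (x k n) <= M.

Definition window_cluster (N : nat) (u : Z -> R) : Prop :=
  forall eps k0, 0 < eps -> exists k, (k0 <= k)%nat /\
    forall n, (Z.abs n <= Z.of_nat N)%Z -> Rabs (x k n - u n) < eps.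

Lemma window_cluster_0 : exists u, window_cluster 0 u.
Proof.
  destruct (cluster_value_along (fun eps k0 k => (k0 <= k)%nat) (fun k => x k 0%Z) M) as [Y HY].
  { intros eps k0 _; exists k0; lia. }
  { intros; lia. }
  { intros; apply x_bounded. }
  exists (fun _ => Y). intros eps k0 He. destruct (HY eps k0 He) as [k [Hk Hk2]].
  exists k; split; auto. intros n Hn. replace n with 0%Z by lia. auto.
Qed.

Lemma window_cluster_succ N u : window_cluster N u ->
  exists u', window_cluster (S N) u' /\ forall n, (Z.abs n <= Z.of_nat N)%Z -> u' n = u n.
Proof.
  intros HP.
  set (Q1 := fun eps k0 k => (k0 <= k)%nat /\
    forall n, (Z.abs n <= Z.of_nat N)%Z -> Rabs (x k n - u n) < eps).
  destruct (cluster_value_along Q1 (fun k => x k (Z.of_nat (S N))) M) as [Y1 HY1]; auto.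
  { intros eps eps' k0 k0' k [H1 H2] H3 H4; split; [lia|]. intros n Hn; specialize (H2 n Hn); lra. }
  set (Q2 := fun eps k0 k => Q1 eps k0 k /\ Rabs (x k (Z.of_nat (S N)) - Y1) < eps).
  destruct (cluster_value_along Q2 (fun k => x k (- Z.of_nat (S N))%Z) M) as [Y2 HY2]; auto.
  { intros eps eps' k0 k0' k [[H1 H2] H5] H3 H4; split; [split|]; [lia| |lra].
    intros n Hn; specialize (H2 n Hn); lra. }
  exists (fun n => if Z.eq_dec n (Z.of_nat (S N)) then Y1
           else if Z.eq_dec n (- Z.of_nat (S N))%Z then Y2 else u n).
  split.
  - intros eps k0 He. destruct (HY2 eps k0 He) as [k [[[Hk1 Hk2] Hk3] Hk4]].
    exists k; split; auto. intros n Hn.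
    destruct (Z.eq_dec n (Z.of_nat (S N))); [subst; auto|].
    destruct (Z.eq_dec n (- Z.of_nat (S N))%Z); [subst; auto|].
    apply Hk2. lia.
  - intros n Hn. destruct (Z.eq_dec n (Z.of_nat (S N))); [lia|].
    destruct (Z.eq_dec n (- Z.of_nat (S N))%Z); [lia|auto].
Qed.

Fixpoint window_limit (N : nat) : {u | window_cluster N u} :=
  match N with
  | O => constructive_indefinite_description _ window_cluster_0
  | S N' =>
      let e := constructive_indefinite_description _
                 (window_cluster_succ N' _ (proj2_sig (window_limit N'))) in
      exist _ (proj1_sig e) (proj1 (proj2_sig e))
  end.

Lemma window_limit_consistent N N' : (N <= N')%nat -> forall n, (Z.abs n <= Z.of_nat N)%Z ->
  proj1_sig (window_limit N') n = proj1_sig (window_limit N) n.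
Proof.
  intros H; induction H as [|N' H IH]; intros n Hn; auto. simpl.
  destruct (constructive_indefinite_description _ _) as [u' [H1 H2]]; simpl.
  rewrite H2 by lia. apply IH; auto.
Qed.

Definition diagonal_limit (n : Z) : R := proj1_sig (window_limit (Z.to_nat (Z.abs n))) n.

Lemma diagonal_limit_window_cluster N : window_cluster N diagonal_limit.
Proof.
  intros eps k0 He. destruct (proj2_sig (window_limit N) eps k0 He) as [k [Hk1 Hk2]].
  exists k; split; auto. intros n Hn. unfold diagonal_limit.
  rewrite <- (window_limit_consistent (Z.to_nat (Z.abs n)) N) by lia. apply Hk2; auto.
Qed.

Lemma bounded_pointwise_cluster : exists (u : Z -> R) (phi : nat -> nat),
  (forall j, (j <= phi j)%nat) /\ forall n, is_lim_seq (fun j => x (phi j) n) (u n).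
Proof.
  destruct (choice (fun j k => (j <= k)%nat /\ forall n, (Z.abs n <= Z.of_nat j)%Z ->
      Rabs (x k n - diagonal_limit n) < / (INR j + 1))
    (fun j => diagonal_limit_window_cluster j _ j (inv_succ_pos j))) as [phi Hphi].
  exists diagonal_limit, phi. split; [intros j; apply Hphi|].
  intros n. apply is_lim_seq_spec. intros eps.
  destruct (inv_succ_eventually_lt eps (cond_pos eps)) as [N HN].
  exists (Nat.max N (Z.to_nat (Z.abs n))). intros j Hj.
  eapply Rlt_trans; [apply Hphi; lia|apply HN; lia].
Qed.

End Diagonal.

Lemma ln_lt_self y : 0 < y -> ln y < y.
Proof.
  intros Hy. destruct (Req_dec (ln y) 0) as [E|E].
  - rewrite E; auto.
  - pose proof (exp_ineq1 (ln y) E). rewrite exp_ln in H; auto. lra.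
Qed.

(** * Real-variable facts *)

Lemma mul_opp_ln_le_1 x : 0 < x -> x * - ln x <= 1.
Proof.
  intros Hx. assert (H : - ln x < / x) by (rewrite <- ln_Rinv by auto; apply ln_lt_self, Rinv_0_lt_compat, Hx).
  apply Rmult_lt_compat_l with (r := x) in H; auto. rewrite Rinv_r in H; lra.
Qed.

Lemma rpow_0 y : rpow 0 y = 0.
Proof. unfold rpow. destruct (Req_EM_T 0 0); auto. congruence. Qed.

Lemma rpow_abs0 y : rpow (Rabs 0) y = 0.
Proof. rewrite Rabs_R0; apply rpow_0. Qed.

Lemma rpow_pos x y : 0 < x -> rpow x y = Rpower x y.
Proof. intros H. unfold rpow. destruct (Req_EM_T x 0); auto. lra. Qed.

Lemma rpow_nonneg x y : 0 <= rpow x y.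
Proof. unfold rpow. destruct (Req_EM_T x 0). lra. unfold Rpower. left; apply exp_pos. Qed.

Lemma Rpower_pos x y : 0 < Rpower x y.
Proof. unfold Rpower; apply exp_pos. Qed.

Lemma pow_even_sqr x k : x ^ (2 * k) = (x ^ 2) ^ k.
Proof. rewrite pow_mult. auto. Qed.

Lemma pow_even_nonneg x k : 0 <= x ^ (2 * k).
Proof. rewrite pow_even_sqr. apply pow_le. nra. Qed.

Lemma pow_even_abs x k : x ^ (2 * k) = Rabs x ^ (2 * k).
Proof. rewrite !pow_even_sqr. f_equal. rewrite <- !Rsqr_pow2. apply Rsqr_abs. Qed.

Lemma pow_odd_sqr x k : (1 <= k)%nat -> x ^ (2 * k - 1) = x * (x ^ 2) ^ (k - 1).
Proof.
  intros Hk. replace (2 * k - 1)%nat with (S (2 * (k - 1))) by lia.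
  rewrite <- tech_pow_Rmult, pow_even_sqr. reflexivity.
Qed.

Lemma pow_odd_neg x k : (1 <= k)%nat -> (- x) ^ (2 * k - 1) = - x ^ (2 * k - 1).
Proof. intros Hk. rewrite !pow_odd_sqr; auto. replace ((- x) ^ 2) with (x ^ 2) by ring. ring. Qed.

Lemma pow_even_neg x k : (- x) ^ (2 * k) = x ^ (2 * k).
Proof. rewrite !pow_even_sqr. f_equal. ring. Qed.

Lemma pow_odd_mul x k : (1 <= k)%nat -> x ^ (2 * k - 1) * x = x ^ (2 * k).
Proof. intros Hk. replace (2 * k)%nat with (S (2 * k - 1)) at 2 by lia. simpl. ring. Qed.

Lemma pow_even_mono x y k : Rabs x <= Rabs y -> x ^ (2 * k) <= y ^ (2 * k).
Proof. intros H. rewrite (pow_even_abs x), (pow_even_abs y). apply pow_incr. split; auto. apply Rabs_pos. Qed.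

Lemma rpow_even (k : nat) x : (1 <= k)%nat -> rpow (Rabs x) (INR (2 * k)) = x ^ (2 * k).
Proof.
  intros Hk. destruct (Req_dec x 0) as [->|E].
  - rewrite rpow_abs0, pow_i by lia. reflexivity.
  - rewrite rpow_pos, Rpower_pow by (apply Rabs_pos_lt; auto). symmetry; apply pow_even_abs.
Qed.

Lemma rpow_even_sub2 (k : nat) x : (1 <= k)%nat -> rpow (Rabs x) (INR (2 * k) - 2) * x = x ^ (2 * k - 1).
Proof.
  intros Hk. destruct (Req_dec x 0) as [E|E].
  - subst. rewrite rpow_abs0. rewrite pow_i by lia. ring.
  - rewrite rpow_pos by (apply Rabs_pos_lt; auto).
    replace (INR (2 * k) - 2) with (INR (2 * (k - 1))).
    2:{ rewrite !mult_INR, minus_INR by lia. simpl. ring. }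
    rewrite Rpower_pow by (apply Rabs_pos_lt; auto). rewrite <- pow_even_abs.
    rewrite pow_odd_sqr by auto. rewrite pow_even_sqr. ring.
Qed.

Lemma rpow_sub2_mul q x : rpow (Rabs x) (q - 2) * x * x = rpow (Rabs x) q.
Proof.
  destruct (Req_dec x 0) as [E|E].
  - subst. rewrite !rpow_abs0. ring.
  - assert (Hx : 0 < Rabs x) by (apply Rabs_pos_lt; auto).
    rewrite !rpow_pos by auto.
    rewrite Rmult_assoc. replace (x * x) with (Rpower (Rabs x) 2).
    + rewrite <- Rpower_plus. f_equal; ring.
    + replace 2 with (INR 2) by (simpl; ring). rewrite Rpower_pow by auto. simpl.
      rewrite Rmult_1_r. rewrite <- Rabs_mult. apply Rabs_right. nra.
Qed.

Lemma lnabs_neq_0 r x : x <> 0 -> lnabs r x = r * ln (Rabs x).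
Proof.
  intros E. unfold lnabs. rewrite rpow_pos by (apply Rabs_pos_lt; auto). unfold Rpower. rewrite ln_exp. auto.
Qed.

Section Scalar.
Variables q r : R.
Hypothesis Hq : 2 <= q.
Hypothesis Hr : 0 <= r.

Definition abs_pow x := rpow (Rabs x) q.
Definition abs_pow_ln x := rpow (Rabs x) q * lnabs r x.

Lemma abs_pow_0 : abs_pow 0 = 0.
Proof. unfold abs_pow; apply rpow_abs0. Qed.
Lemma abs_pow_ln_0 : abs_pow_ln 0 = 0.
Proof. unfold abs_pow_ln; rewrite rpow_abs0; ring. Qed.

Lemma abs_pow_nonneg x : 0 <= abs_pow x.
Proof. apply rpow_nonneg. Qed.

Lemma abs_pow_opp x : abs_pow (- x) = abs_pow x.
Proof. unfold abs_pow; rewrite Rabs_Ropp; auto. Qed.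
Lemma abs_pow_ln_opp x : abs_pow_ln (- x) = abs_pow_ln x.
Proof. unfold abs_pow_ln, lnabs; rewrite Rabs_Ropp; auto. Qed.

Lemma abs_pow_exp x : x <> 0 -> abs_pow x = exp (q * ln (Rabs x)).
Proof. intros E; unfold abs_pow; rewrite rpow_pos by (apply Rabs_pos_lt; auto); auto. Qed.
Lemma abs_pow_ln_exp x : x <> 0 -> abs_pow_ln x = exp (q * ln (Rabs x)) * (r * ln (Rabs x)).
Proof.
  intros E; unfold abs_pow_ln. rewrite lnabs_neq_0, rpow_pos by (auto; apply Rabs_pos_lt; auto). reflexivity.
Qed.

Lemma abs_pow_le x y : Rabs x <= Rabs y -> abs_pow x <= abs_pow y.
Proof.
  intros H. destruct (Req_dec x 0) as [E|E].
  - subst; rewrite abs_pow_0; apply abs_pow_nonneg.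
  - assert (0 < Rabs x) by (apply Rabs_pos_lt; auto).
    unfold abs_pow. rewrite !rpow_pos by lra. apply Rle_Rpower_l; lra.
Qed.

Lemma abs_pow_lt x y : x <> 0 -> Rabs x < Rabs y -> abs_pow x < abs_pow y.
Proof.
  intros E H. assert (0 < Rabs x) by (apply Rabs_pos_lt; auto).
  unfold abs_pow. rewrite !rpow_pos by lra. unfold Rpower. apply exp_increasing.
  apply Rmult_lt_compat_l. lra. apply ln_increasing; lra.
Qed.

Lemma abs_pow_pos x : x <> 0 -> 0 < abs_pow x.
Proof. intros E; rewrite abs_pow_exp; auto; apply exp_pos. Qed.

Lemma Rpower_le_1 y e : 0 < y <= 1 -> 0 <= e -> Rpower y e <= 1.
Proof.
  intros [H1 H2] He. unfold Rpower. rewrite <- exp_0.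
  assert (ln y <= 0). { rewrite <- ln_1. apply ln_le; lra. }
  destruct (Req_dec (e * ln y) 0) as [E|E]. rewrite E; lra.
  left; apply exp_increasing. assert (e * ln y <= 0) by nra. lra.
Qed.

Lemma abs_pow_le_abs x : Rabs x <= 1 -> abs_pow x <= Rabs x.
Proof.
  intros H. destruct (Req_dec x 0) as [E|E].
  - subst; rewrite abs_pow_0, Rabs_R0; lra.
  - assert (0 < Rabs x) by (apply Rabs_pos_lt; auto).
    unfold abs_pow. rewrite rpow_pos by auto.
    replace q with (1 + (q - 1)) by ring. rewrite Rpower_plus, Rpower_1 by auto.
    pose proof (Rpower_le_1 (Rabs x) (q - 1) ltac:(lra) ltac:(lra)). nra.
Qed.

Lemma abs_pow_ln_small x : Rabs x <= 1 -> Rabs (abs_pow_ln x) <= r * Rabs x /\ abs_pow_ln x <= 0.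
Proof.
  intros H. destruct (Req_dec x 0) as [->|E]; [rewrite abs_pow_ln_0, !Rabs_R0; lra|].
  assert (HX : 0 < Rabs x) by (apply Rabs_pos_lt; auto).
  set (X := Rabs x) in *. set (Y := Rpower X (q - 2)).
  assert (Hl : ln X <= 0) by (rewrite <- ln_1; apply ln_le; lra).
  pose proof (mul_opp_ln_le_1 X HX).
  assert (HY : 0 < Y <= 1) by (split; [apply Rpower_pos|apply Rpower_le_1; lra]).
  assert (Hform : abs_pow_ln x = - (r * X) * (Y * (X * - ln X))).
  { rewrite abs_pow_ln_exp by auto. fold X. change (exp (q * ln X)) with (Rpower X q).
    replace q with (1 + (1 + (q - 2))) at 1 by ring. rewrite !Rpower_plus, Rpower_1 by auto. fold Y. ring. }
  assert (Hprod : 0 <= Y * (X * - ln X) <= 1) by (split; [apply Rmult_le_pos|]; nra).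
  assert (HrX : 0 <= r * X) by (apply Rmult_le_pos; lra).
  assert (0 <= r * X * (Y * (X * - ln X))) by (apply Rmult_le_pos; lra).
  rewrite Hform, Rabs_mult, Rabs_Ropp, !Rabs_right by lra. split; [|lra].
  rewrite <- (Rmult_1_r (r * X)) at 2. apply Rmult_le_compat_l; lra.
Qed.

Lemma abs_pow_bound x R : 1 <= R -> Rabs x <= R -> abs_pow x <= Rpower R q.
Proof.
  intros HR Hx. destruct (Req_dec x 0) as [E|E].
  - subst; rewrite abs_pow_0. left; apply Rpower_pos.
  - assert (0 < Rabs x) by (apply Rabs_pos_lt; auto).
    unfold abs_pow. rewrite rpow_pos by auto. apply Rle_Rpower_l; lra.
Qed.

Lemma abs_pow_ln_bound x R : 1 <= R -> Rabs x <= R -> Rabs (abs_pow_ln x) <= r + r * Rpower R q * R.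
Proof.
  intros HR Hx. pose proof (Rpower_pos R q).
  destruct (Rle_dec (Rabs x) 1) as [Hx1|Hx1].
  - destruct (abs_pow_ln_small x Hx1).
    assert (0 <= r * Rpower R q * R) by (apply Rmult_le_pos; [apply Rmult_le_pos|]; lra). nra.
  - apply Rnot_le_lt in Hx1. assert (x <> 0) by (intro; subst; rewrite Rabs_R0 in Hx1; lra).
    pose proof (abs_pow_bound x R HR Hx). rewrite abs_pow_ln_exp by auto.
    replace (exp (q * ln (Rabs x))) with (abs_pow x) by (rewrite abs_pow_exp; auto).
    assert (0 <= ln (Rabs x)) by (rewrite <- ln_1; apply ln_le; lra).
    pose proof (ln_lt_self (Rabs x) ltac:(lra)).
    pose proof (abs_pow_nonneg x).
    rewrite Rabs_right by (apply Rle_ge; apply Rmult_le_pos; [lra|apply Rmult_le_pos; lra]).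
    assert (abs_pow x * ln (Rabs x) <= Rpower R q * R) by (apply Rmult_le_compat; lra).
    nra.
Qed.

Lemma abs_pow_scale s x : 0 < s -> abs_pow (s * x) = Rpower s q * abs_pow x.
Proof.
  intros Hs. destruct (Req_dec x 0) as [E|E].
  - subst. rewrite Rmult_0_r, abs_pow_0. ring.
  - assert (s * x <> 0) by (apply Rmult_integral_contrapositive; split; lra).
    rewrite !abs_pow_exp by auto. rewrite Rabs_mult, Rabs_right by lra.
    rewrite ln_mult by (try apply Rabs_pos_lt; auto). unfold Rpower. rewrite <- exp_plus. f_equal; ring.
Qed.

Lemma abs_pow_ln_scale s x : 0 < s -> abs_pow_ln (s * x) = Rpower s q * (abs_pow_ln x + r * ln s * abs_pow x).
Proof.
  intros Hs. destruct (Req_dec x 0) as [E|E].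
  - subst. rewrite Rmult_0_r, abs_pow_ln_0, abs_pow_0. ring.
  - assert (s * x <> 0) by (apply Rmult_integral_contrapositive; split; lra).
    rewrite !abs_pow_ln_exp, abs_pow_exp by auto. rewrite Rabs_mult, Rabs_right by lra.
    rewrite ln_mult by (try apply Rabs_pos_lt; auto). unfold Rpower.
    replace (q * (ln s + ln (Rabs x))) with (q * ln s + q * ln (Rabs x)) by ring. rewrite exp_plus. ring.
Qed.

Lemma continuity_pt_exp x : continuity_pt exp x.
Proof. apply derivable_continuous_pt, derivable_pt_exp. Qed.
Lemma continuity_pt_ln x : 0 < x -> continuity_pt ln x.
Proof. intros H. apply derivable_continuous_pt. exists (/ x). apply derivable_pt_lim_ln; auto. Qed.

Lemma is_lim_seq_eventually_neq_0 (u : nat -> R) (l : R) :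
  l <> 0 -> is_lim_seq u l -> eventually (fun j => u j <> 0).
Proof.
  intros E H. apply is_lim_seq_spec in H. assert (He : 0 < Rabs l) by (apply Rabs_pos_lt; auto).
  destruct (H (mkposreal _ He)) as [N HN]. exists N. intros j Hj Hu. specialize (HN j Hj). simpl in HN.
  rewrite Hu in HN. rewrite Rminus_0_l, Rabs_Ropp in HN. lra.
Qed.

Lemma is_lim_seq_ln_abs (u : nat -> R) (l : R) :
  l <> 0 -> is_lim_seq u l -> is_lim_seq (fun j => ln (Rabs (u j))) (ln (Rabs l)).
Proof.
  intros E H. apply (is_lim_seq_continuous ln (fun j => Rabs (u j))).
  - apply continuity_pt_ln, Rabs_pos_lt, E.
  - apply (is_lim_seq_abs _ _ H).
Qed.

Lemma is_lim_seq_0_dominated (u v : nat -> R) C : 0 <= C -> is_lim_seq u 0 ->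
  (forall j, Rabs (u j) <= 1 -> Rabs (v j) <= C * Rabs (u j)) -> is_lim_seq v 0.
Proof.
  intros HC Hu Hv. apply is_lim_seq_spec in Hu. apply is_lim_seq_spec. intros eps.
  assert (He : 0 < Rmin 1 (eps / (C + 1))).
  { apply Rmin_pos; [lra|]. apply Rdiv_lt_0_compat; [destruct eps; simpl; lra|lra]. }
  destruct (Hu (mkposreal _ He)) as [N HN]. exists N. intros j Hj. specialize (HN j Hj). simpl in HN.
  rewrite Rminus_0_r in *. pose proof (Rmin_l 1 (eps / (C + 1))). pose proof (Rmin_r 1 (eps / (C + 1))).
  specialize (Hv j ltac:(lra)).
  assert (C * Rabs (u j) <= C * (eps / (C + 1))) by (apply Rmult_le_compat_l; lra).
  assert (C * (eps / (C + 1)) < eps).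
  { destruct eps as [e He']; simpl. apply Rmult_lt_reg_r with (C + 1). lra. field_simplify; lra. }
  lra.
Qed.

Lemma is_lim_seq_abs_pow (u : nat -> R) (l : R) :
  is_lim_seq u l -> is_lim_seq (fun j => abs_pow (u j)) (abs_pow l).
Proof.
  intros H. destruct (Req_dec l 0) as [E|E].
  - subst. rewrite abs_pow_0. apply is_lim_seq_0_dominated with u 1. lra. auto.
    intros j Hj. pose proof (abs_pow_le_abs (u j) Hj). rewrite Rabs_right by (apply Rle_ge, abs_pow_nonneg). lra.
  - rewrite abs_pow_exp by auto. apply is_lim_seq_ext_loc with (fun j => exp (q * ln (Rabs (u j)))).
    + destruct (is_lim_seq_eventually_neq_0 u l E H) as [N HN]. exists N. intros j Hj. rewrite abs_pow_exp; auto.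
    + apply (is_lim_seq_continuous exp (fun j => q * ln (Rabs (u j)))). apply continuity_pt_exp.
      apply (is_lim_seq_scal_l _ q (ln (Rabs l))). apply is_lim_seq_ln_abs; auto.
Qed.

Lemma is_lim_seq_abs_pow_ln (u : nat -> R) (l : R) :
  is_lim_seq u l -> is_lim_seq (fun j => abs_pow_ln (u j)) (abs_pow_ln l).
Proof.
  intros H. destruct (Req_dec l 0) as [E|E].
  - subst. rewrite abs_pow_ln_0. apply is_lim_seq_0_dominated with u r. lra. auto.
    intros j Hj. apply (abs_pow_ln_small (u j) Hj).
  - rewrite abs_pow_ln_exp by auto.
    apply is_lim_seq_ext_loc with (fun j => exp (q * ln (Rabs (u j))) * (r * ln (Rabs (u j)))).
    + destruct (is_lim_seq_eventually_neq_0 u l E H) as [N HN].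
      exists N. intros j Hj. rewrite abs_pow_ln_exp; auto.
    + apply is_lim_seq_mult'.
      apply (is_lim_seq_continuous exp (fun j => q * ln (Rabs (u j)))). apply continuity_pt_exp.
      apply (is_lim_seq_scal_l _ q (ln (Rabs l))). apply is_lim_seq_ln_abs; auto.
      apply (is_lim_seq_scal_l _ r (ln (Rabs l))). apply is_lim_seq_ln_abs; auto.
Qed.

End Scalar.

Lemma is_lim_seq_pow (u : nat -> R) (l : R) n : is_lim_seq u l -> is_lim_seq (fun j => u j ^ n) (l ^ n).
Proof.
  intros H. apply (is_lim_seq_continuous (fun y => y ^ n)); auto.
  apply derivable_continuous_pt, derivable_pt_pow.
Qed.

Lemma Rmax0_half x : Rmax x 0 = (x + Rabs x) / 2.
Proof. unfold Rmax, Rabs. destruct (Rle_dec x 0), (Rcase_abs x); lra. Qed.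
Lemma Rmin0_half x : Rmin x 0 = (x - Rabs x) / 2.
Proof. unfold Rmin, Rabs. destruct (Rle_dec x 0), (Rcase_abs x); lra. Qed.

Lemma is_lim_seq_max0 (u : nat -> R) (l : R) : is_lim_seq u l -> is_lim_seq (fun j => Rmax (u j) 0) (Rmax l 0).
Proof.
  intros H. rewrite Rmax0_half. apply is_lim_seq_ext with (fun j => / 2 * (u j + Rabs (u j))).
  intros; rewrite Rmax0_half; field. replace ((l + Rabs l) / 2) with (/2 * (l + Rabs l)) by field.
  apply (is_lim_seq_scal_l _ (/2) (l + Rabs l)). apply is_lim_seq_plus'; auto. apply (is_lim_seq_abs _ _ H).
Qed.
Lemma is_lim_seq_min0 (u : nat -> R) (l : R) : is_lim_seq u l -> is_lim_seq (fun j => Rmin (u j) 0) (Rmin l 0).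
Proof.
  intros H. rewrite Rmin0_half. apply is_lim_seq_ext with (fun j => / 2 * (u j - Rabs (u j))).
  intros; rewrite Rmin0_half; field. replace ((l - Rabs l) / 2) with (/2 * (l - Rabs l)) by field.
  apply (is_lim_seq_scal_l _ (/2) (l - Rabs l)). apply is_lim_seq_minus'; auto. apply (is_lim_seq_abs _ _ H).
Qed.

Lemma pow_odd_incr (k : nat) x y : (1 <= k)%nat -> x <= y -> x ^ (2 * k - 1) <= y ^ (2 * k - 1).
Proof.
  intros Hk H.
  destruct (Rle_dec 0 x) as [Hx|Hx].
  - apply pow_incr; lra.
  - destruct (Rle_dec 0 y) as [Hy|Hy].
    + assert (x ^ (2*k-1) <= 0).
      { replace x with (- (-x)) by ring. rewrite pow_odd_neg by auto.
        pose proof (pow_le (-x) (2*k-1) ltac:(lra)). lra. }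
      pose proof (pow_le y (2*k-1) Hy). lra.
    + assert (Hneg : (-y)^(2*k-1) <= (-x)^(2*k-1)) by (apply pow_incr; lra).
      rewrite !pow_odd_neg in Hneg by auto. lra.
Qed.

Definition same_sign (y z : R) : Prop := (0 <= y /\ 0 <= z) \/ (y <= 0 /\ z <= 0).

Lemma pow_odd_shrink_le (k : nat) s y z : (1 <= k)%nat -> 0 <= s <= 1 -> same_sign y z ->
  (s * y + z) ^ (2*k-1) * y <= (y + z) ^ (2*k-1) * y /\ (s * y + z) ^ (2*k-1) * z <= (y + z) ^ (2*k-1) * z.
Proof.
  intros Hk Hs [[H1 H2]|[H1 H2]].
  - assert (s * y + z <= y + z) by nra.
    pose proof (pow_odd_incr k _ _ Hk H). split; apply Rmult_le_compat_r; auto.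
  - assert (y + z <= s * y + z) by nra.
    pose proof (pow_odd_incr k _ _ Hk H). split; apply Rmult_le_compat_neg_l' || nra.
    all: nra.
Qed.

Lemma pow_odd_mul_max0 (k : nat) x : (1 <= k)%nat -> x ^ (2 * k - 1) * Rmax x 0 = Rmax x 0 ^ (2 * k).
Proof.
  intros Hk. unfold Rmax. destruct (Rle_dec x 0); [rewrite pow_i by lia; ring|apply pow_odd_mul, Hk].
Qed.

Lemma pow_odd_mul_min0 (k : nat) x : (1 <= k)%nat -> x ^ (2 * k - 1) * Rmin x 0 = Rmin x 0 ^ (2 * k).
Proof.
  intros Hk. unfold Rmin. destruct (Rle_dec x 0); [apply pow_odd_mul, Hk|rewrite pow_i by lia; ring].
Qed.

Lemma same_sign_max0_min0 x : same_sign (Rmax x 0) (Rmin x 0).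
Proof. unfold same_sign, Rmax, Rmin. destruct (Rle_dec x 0); [right|left]; lra. Qed.

Lemma same_sign_max0_min0_diff x y : same_sign (Rmax y 0 - Rmax x 0) (Rmin y 0 - Rmin x 0).
Proof.
  unfold same_sign, Rmax, Rmin. destruct (Rle_dec x y); [left|right];
  destruct (Rle_dec x 0), (Rle_dec y 0); lra.
Qed.

Lemma max0_plus_min0 x : Rmax x 0 + Rmin x 0 = x.
Proof. unfold Rmax, Rmin; destruct (Rle_dec x 0); lra. Qed.

Lemma max0_lipschitz x y : Rabs (Rmax y 0 - Rmax x 0) <= Rabs (y - x).
Proof.
  rewrite !Rmax0_half.
  replace ((y + Rabs y) / 2 - (x + Rabs x) / 2) with ((y - x) * / 2 + (Rabs y - Rabs x) * / 2) by field.
  eapply Rle_trans; [apply Rabs_triang|]. rewrite !Rabs_mult, (Rabs_right (/ 2)) by lra.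
  pose proof (Rabs_triang_inv2 y x). lra.
Qed.

Lemma min0_lipschitz x y : Rabs (Rmin y 0 - Rmin x 0) <= Rabs (y - x).
Proof.
  rewrite !Rmin0_half.
  replace ((y - Rabs y) / 2 - (x - Rabs x) / 2) with ((y - x) * / 2 + (Rabs x - Rabs y) * / 2) by field.
  eapply Rle_trans; [apply Rabs_triang|]. rewrite !Rabs_mult, (Rabs_right (/ 2)) by lra.
  pose proof (Rabs_triang_inv2 x y). rewrite (Rabs_minus_sym x y) in H. lra.
Qed.

Lemma Rabs_shrink_le s y z : 0 <= s <= 1 -> same_sign y z -> Rabs (s * y + z) <= Rabs (y + z).
Proof.
  intros Hs [[H1 H2]|[H1 H2]].
  - rewrite !Rabs_right by nra. nra.
  - rewrite !Rabs_left1 by nra. nra.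
Qed.

Lemma max0_shrink s x : 0 < s -> Rmax (s * Rmax x 0 + Rmin x 0) 0 = s * Rmax x 0.
Proof.
  intros Hs. destruct (Rle_dec x 0).
  - rewrite (Rmax_right x 0), (Rmin_left x 0), Rmax_right; lra.
  - rewrite (Rmax_left x 0), (Rmin_right x 0), Rmax_left; nra.
Qed.

Lemma min0_shrink s x : 0 < s -> Rmin (s * Rmax x 0 + Rmin x 0) 0 = Rmin x 0.
Proof.
  intros Hs. destruct (Rle_dec x 0).
  - rewrite (Rmax_right x 0), (Rmin_left x 0), Rmin_left; lra.
  - rewrite (Rmax_left x 0), (Rmin_right x 0), Rmin_right; nra.
Qed.

Lemma pow_even_shrink_le (k : nat) s y z : 0 <= s <= 1 -> same_sign y z ->
  (s * y + z) ^ (2 * k) <= (y + z) ^ (2 * k).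
Proof. intros Hs Hyz. apply pow_even_mono, Rabs_shrink_le; auto. Qed.

Lemma pow_odd_mul_bound (k : nat) x y : (1 <= k)%nat -> 0 <= x * y -> Rabs y <= Rabs x ->
  0 <= x ^ (2*k-1) * y <= x ^ (2*k).
Proof.
  intros Hk H1 H2. rewrite pow_odd_sqr by auto. rewrite pow_even_sqr.
  replace ((x^2)^k) with (x^2 * (x^2)^(k-1)).
  2:{ rewrite tech_pow_Rmult. f_equal. lia. }
  assert (0 <= (x ^ 2) ^ (k - 1)) by (apply pow_le; nra).
  assert (x * y <= x ^ 2).
  { rewrite <- (Rabs_right (x*y)) by lra. rewrite Rabs_mult. replace (x^2) with (Rabs x * Rabs x).
    apply Rmult_le_compat_l; auto. apply Rabs_pos. rewrite <- Rabs_mult. rewrite Rabs_right by nra. ring. }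
  split; nra.
Qed.

Lemma max0_dominated x : 0 <= x * Rmax x 0 /\ Rabs (Rmax x 0) <= Rabs x.
Proof. unfold Rmax. destruct (Rle_dec x 0). rewrite Rabs_R0; split; [nra|apply Rabs_pos]. split; [nra|lra]. Qed.
Lemma min0_dominated x : 0 <= x * Rmin x 0 /\ Rabs (Rmin x 0) <= Rabs x.
Proof. unfold Rmin. destruct (Rle_dec x 0). split; [nra|lra]. rewrite Rabs_R0; split; [nra|apply Rabs_pos]. Qed.

Lemma max0_diff_mul_nonneg x y : 0 <= (y - x) * (Rmax y 0 - Rmax x 0).
Proof.
  unfold Rmax. destruct (Rle_dec x 0) as [|Hx%Rnot_le_lt], (Rle_dec y 0) as [|Hy%Rnot_le_lt];
    first [apply Rle_0_sqr|nra].
Qed.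
Lemma min0_diff_mul_nonneg x y : 0 <= (y - x) * (Rmin y 0 - Rmin x 0).
Proof.
  unfold Rmin. destruct (Rle_dec x 0) as [|Hx%Rnot_le_lt], (Rle_dec y 0) as [|Hy%Rnot_le_lt];
    first [apply Rle_0_sqr|nra].
Qed.

Lemma fun_neq_0 (u : Z -> R) : u <> (fun _ => 0) <-> exists n, u n <> 0.
Proof.
  split.
  - intros H. apply NNPP. intros H2. apply H. apply functional_extensionality. intros n.
    apply NNPP. intros H3. apply H2. exists n; auto.
  - intros [n Hn] E. rewrite E in Hn. apply Hn; auto.
Qed.

Lemma is_lim_seq_scal_l_R (x : nat -> R) (l C : R) : is_lim_seq x l -> is_lim_seq (fun j => C * x j) (C * l).
Proof. intros H. apply is_lim_seq_mult'; auto. apply is_lim_seq_const. Qed.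

Lemma scaling_below_one (q r L A B : R) (m : nat) : A < L ->
  exists s, 0 < s < 1 /\ s ^ m * A <= Rpower s q * (L + r * ln s * B).
Proof.
  intros HSL.
  set (sj := fun j : nat => 1 - / (INR (S j) + 1)).
  assert (Hs : is_lim_seq sj 1).
  { assert (H := is_lim_seq_minus' _ _ 1 0 (is_lim_seq_const 1)
      (proj1 (is_lim_seq_incr_1 _ _) is_lim_seq_inv_succ)).
    rewrite Rminus_0_r in H. exact H. }
  assert (Hsr : forall j, 0 < sj j < 1).
  { intros j. unfold sj. pose proof (lt_0_INR (S j) ltac:(lia)). pose proof (inv_succ_pos (S j)).
    assert (/ (INR (S j) + 1) < 1) by (rewrite <- Rinv_1; apply Rinv_lt_contravar; lra). lra. }
  assert (Hg : is_lim_seq (fun j => Rpower (sj j) q * (L + r * ln (sj j) * B) - sj j ^ m * A)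
                          (Rpower 1 q * (L + r * ln 1 * B) - 1 ^ m * A)).
  { apply is_lim_seq_minus'. apply is_lim_seq_mult'.
    - apply (is_lim_seq_continuous (fun s => Rpower s q)); auto. apply derivable_continuous_pt.
      exists (q * Rpower 1 (q - 1)). apply derivable_pt_lim_power. lra.
    - apply is_lim_seq_plus'. apply is_lim_seq_const. apply is_lim_seq_mult'; [|apply is_lim_seq_const].
      apply is_lim_seq_scal_l_R. apply (is_lim_seq_continuous ln); auto. apply continuity_pt_ln. lra.
    - apply is_lim_seq_mult'; [|apply is_lim_seq_const]. apply is_lim_seq_pow; auto. }
  rewrite ln_1, pow1 in Hg. unfold Rpower in Hg. rewrite ln_1, Rmult_0_r, exp_0 in Hg.
  apply is_lim_seq_spec in Hg. assert (He : 0 < L - A) by lra.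
  destruct (Hg (mkposreal _ He)) as [N HN]. specialize (HN N (Nat.le_refl _)). simpl in HN.
  exists (sj N). split; auto. apply Rabs_lt_between in HN. unfold Rpower. lra.
Qed.

Lemma nonneg_infimum (E : R -> Prop) : (exists y, E y) -> (forall y, E y -> 0 <= y) ->
  exists m, 0 <= m /\ (forall y, E y -> m <= y) /\ forall eps, 0 < eps -> exists y, E y /\ y < m + eps.
Proof.
  intros [y0 Hy0] Hpos.
  destruct (completeness (fun x => E (- x))) as [l [Hub Hlub]].
  - exists 0. intros x Hx. specialize (Hpos _ Hx). lra.
  - exists (- y0). rewrite Ropp_involutive. auto.
  - exists (- l). split; [|split].
    + assert (l <= 0). { apply Hlub. intros x Hx. specialize (Hpos _ Hx). lra. } lra.
    + intros y Hy. assert (- y <= l). { apply Hub. rewrite Ropp_involutive; auto. } lra.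
    + intros eps He. apply NNPP. intros Hno.
      assert (l <= l - eps).
      { apply Hlub. intros x Hx. apply Rnot_lt_le. intros Hlt. apply Hno. exists (- x). split; auto. lra. }
      lra.
Qed.

(** * The functional for an even exponent *)

Section Functional.
Variables (p q r : R) (a b c : Z -> R) (k : nat) (b0 : R).
Hypothesis k_pos : (1 <= k)%nat.
Hypothesis p_even : p = INR (2 * k).
Hypothesis p_lt_q : p < q.
Hypothesis r_pos : 0 < r.
Hypothesis a_pos : forall n, 0 < a n.
Hypothesis b_pos : forall n, 0 < b n.
Hypothesis c_pos : forall n, 0 < c n.
Hypothesis b0_pos : 0 < b0.
Hypothesis b_ge_b0 : forall n, b0 <= b n.
Hypothesis c_summable : exZ c.

Lemma p_ge_2 : 2 <= p.
Proof. rewrite p_even, mult_INR. apply le_INR in k_pos. simpl in *. lra. Qed.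

Lemma q_ge_2 : 2 <= q.
Proof. pose proof p_ge_2; lra. Qed.

Lemma r_nonneg : 0 <= r.
Proof. lra. Qed.

(* [p] as a natural number: [|t|^p = t ^ pnat] and [|t|^(p-2) t = t ^ (pnat - 1)]. *)
Definition pnat : nat := 2 * k.

Definition energy_density (u : Z -> R) (n : Z) : R :=
  a n * Defs.Delta u n ^ pnat + b n * u n ^ pnat.
(* The non-logarithmic parts of [dI u (posp u)] and [dI u (negp u)]. *)
Definition energy_pos_density (u : Z -> R) (n : Z) : R :=
  a n * Defs.Delta u n ^ (pnat - 1) * Defs.Delta (posp u) n + b n * u n ^ (pnat - 1) * posp u n.
Definition energy_neg_density (u : Z -> R) (n : Z) : R :=
  a n * Defs.Delta u n ^ (pnat - 1) * Defs.Delta (negp u) n + b n * u n ^ (pnat - 1) * negp u n.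
Definition mass_density (u : Z -> R) (n : Z) : R := c n * abs_pow q (u n).
Definition log_density (u : Z -> R) (n : Z) : R := c n * abs_pow_ln q r (u n).

Definition energy (u : Z -> R) : R := sumZ (energy_density u).
Definition energy_pos (u : Z -> R) : R := sumZ (energy_pos_density u).
Definition energy_neg (u : Z -> R) : R := sumZ (energy_neg_density u).
Definition mass (u : Z -> R) : R := sumZ (mass_density u).
Definition log_mass (u : Z -> R) : R := sumZ (log_density u).
Definition finite_energy (u : Z -> R) : Prop := exZ (energy_density u).

Definition alpha : R := 1 / p - 1 / q.
Definition beta : R := r / q ^ 2.
(* On [Mset] and [Nset] the constraint trades the logarithmic sum for the energy, and [Ifun] becomes [Ired]. *)
Definition Ired (u : Z -> R) : R := alpha * energy u + beta * mass u.

(* Relaxed constraint sets: inequalities, unlike the Nehari identities, survive pointwise limits. *)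
Definition Mrel (u : Z -> R) : Prop :=
  finite_energy u /\ posp u <> (fun _ => 0) /\ negp u <> (fun _ => 0) /\
  energy_pos u <= log_mass (posp u) /\ energy_neg u <= log_mass (negp u).
Definition Nrel (u : Z -> R) : Prop :=
  finite_energy u /\ u <> (fun _ => 0) /\ energy u <= log_mass u.

Lemma alpha_pos : 0 < alpha.
Proof.
  unfold alpha, Rdiv. rewrite !Rmult_1_l. pose proof p_ge_2.
  assert (/ q < / p) by (apply Rinv_lt_contravar; nra). lra.
Qed.

Lemma beta_pos : 0 < beta.
Proof. unfold beta. pose proof q_ge_2. apply Rdiv_lt_0_compat; nra. Qed.

Lemma pow_pnat_nonneg x : 0 <= x ^ pnat.
Proof. apply pow_even_nonneg. Qed.

Lemma pow_pnat_pos x : x <> 0 -> 0 < x ^ pnat.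
Proof. intros H. unfold pnat. rewrite pow_even_abs. apply pow_lt, Rabs_pos_lt, H. Qed.

Lemma pow_pnat_ge_1 x : 1 <= Rabs x -> 1 <= x ^ pnat.
Proof. intros H. unfold pnat. rewrite pow_even_abs. apply pow_R1_Rle, H. Qed.

Lemma energy_density_nonneg u n : 0 <= energy_density u n.
Proof.
  unfold energy_density. pose proof (a_pos n); pose proof (b_pos n).
  pose proof (pow_pnat_nonneg (Defs.Delta u n)); pose proof (pow_pnat_nonneg (u n)). nra.
Qed.

Lemma energy_density_ge u n : b n * u n ^ pnat <= energy_density u n.
Proof. unfold energy_density. pose proof (a_pos n); pose proof (pow_pnat_nonneg (Defs.Delta u n)). nra. Qed.

Lemma energy_nonneg u : finite_energy u -> 0 <= energy u.
Proof. intros H; apply sumZ_nonneg; auto; apply energy_density_nonneg. Qed.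

Lemma finite_energy_sup_bound u : finite_energy u -> forall n, Rabs (u n) <= Rmax 1 (energy u / b0).
Proof.
  intros H n. pose proof (term_le_sumZ _ n (energy_density_nonneg u) H) as Hn.
  pose proof (energy_density_ge u n). pose proof (b_ge_b0 n). pose proof (pow_pnat_nonneg (u n)).
  assert (Hb0 : b0 * u n ^ pnat <= energy u) by (unfold energy; nra).
  destruct (Rle_dec (Rabs (u n)) 1); [eapply Rle_trans; [eauto|apply Rmax_l]|].
  eapply Rle_trans; [|apply Rmax_r].
  apply Rle_trans with (u n ^ pnat).
  - unfold pnat. rewrite pow_even_abs, <- (pow_1 (Rabs (u n))) at 1. apply Rle_pow; lia || lra.
  - apply Rmult_le_reg_l with b0; auto. replace (b0 * (energy u / b0)) with (energy u) by (field; lra). lra.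
Qed.

Definition log_bound_const (M : R) : R := r + r * Rpower M q * M.

Lemma bounded_densities_dominated u M : 1 <= M -> (forall n, Rabs (u n) <= M) ->
  (forall n, Rabs (mass_density u n) <= c n * Rpower M q) /\
  (forall n, Rabs (log_density u n) <= c n * log_bound_const M).
Proof.
  intros H1 H2. split; intros n; unfold mass_density, log_density;
    rewrite Rabs_mult, (Rabs_right (c n)) by (left; apply c_pos);
    apply Rmult_le_compat_l; try (left; apply c_pos).
  - rewrite Rabs_right by (apply Rle_ge, abs_pow_nonneg). apply abs_pow_bound; auto using q_ge_2.
  - apply abs_pow_ln_bound; auto using q_ge_2, r_nonneg.
Qed.

Lemma exZ_c_const x : exZ (fun n => c n * x).
Proof. apply exZ_ext with (fun n => x * c n); [intros; ring|apply exZ_scal; auto]. Qed.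

Lemma bounded_densities_summable u M : 1 <= M -> (forall n, Rabs (u n) <= M) ->
  exZ (mass_density u) /\ exZ (fun n => Rabs (log_density u n)).
Proof.
  intros H1 H2. destruct (bounded_densities_dominated u M H1 H2) as [B1 B2]. split.
  - apply exZ_dom with (fun n => c n * Rpower M q); auto. apply exZ_c_const.
  - apply exZ_dom with (fun n => c n * log_bound_const M); [|apply exZ_c_const].
    intros; rewrite Rabs_Rabsolu; auto.
Qed.

Lemma posp_abs_le u n : Rabs (posp u n) <= Rabs (u n).
Proof. apply max0_dominated. Qed.

Lemma negp_abs_le u n : Rabs (negp u n) <= Rabs (u n).
Proof. apply min0_dominated. Qed.

Lemma finite_energy_summable u v : finite_energy u -> (forall n, Rabs (v n) <= Rabs (u n)) ->
  exZ (mass_density v) /\ exZ (log_density v) /\ exZ (fun n => Rabs (log_density v n)).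
Proof.
  intros H Hvu.
  destruct (bounded_densities_summable v (Rmax 1 (energy u / b0))) as [E1 E2]; [apply Rmax_l| |].
  - intros n; eapply Rle_trans; [apply Hvu|apply finite_energy_sup_bound, H].
  - split; [|split]; auto. apply exZ_dom with (fun n => Rabs (log_density v n)); auto. intros; lra.
Qed.

Lemma mass_density_nonneg u n : 0 <= mass_density u n.
Proof. unfold mass_density. pose proof (c_pos n); pose proof (abs_pow_nonneg q (u n)). nra. Qed.

Lemma Ired_nonneg u : finite_energy u -> 0 <= Ired u.
Proof.
  intros H. unfold Ired. pose proof alpha_pos; pose proof beta_pos; pose proof (energy_nonneg u H).
  assert (0 <= mass u).
  { apply sumZ_nonneg; [apply mass_density_nonneg|apply (finite_energy_summable u u H (fun n => Rle_refl _))]. }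
  apply Rplus_le_le_0_compat; apply Rmult_le_pos; lra.
Qed.

Lemma mass_pos u : finite_energy u -> u <> (fun _ => 0) -> 0 < mass u.
Proof.
  intros H Hu. apply fun_neq_0 in Hu. destruct Hu as [n0 Hn0].
  apply Rlt_le_trans with (mass_density u n0).
  - apply Rmult_lt_0_compat; [apply c_pos|apply abs_pow_pos; auto].
  - apply term_le_sumZ; [apply mass_density_nonneg|apply (finite_energy_summable u u H (fun n => Rle_refl _))].
Qed.

Lemma energy_pos_density_bounds u n :
  b n * posp u n ^ pnat <= energy_pos_density u n <= energy_density u n.
Proof.
  unfold energy_pos_density, energy_density, pnat, posp, Defs.Delta. pose proof (a_pos n); pose proof (b_pos n).
  pose proof (pow_odd_mul_bound k _ _ k_pos (max0_diff_mul_nonneg (u n) (u (n + 1)%Z)) (max0_lipschitz _ _)).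
  destruct (max0_dominated (u n)) as [G1 G2]. pose proof (pow_odd_mul_bound k _ _ k_pos G1 G2).
  rewrite <- (pow_odd_mul_max0 k (u n) k_pos). split; nra.
Qed.

Lemma energy_neg_density_bounds u n :
  b n * negp u n ^ pnat <= energy_neg_density u n <= energy_density u n.
Proof.
  unfold energy_neg_density, energy_density, pnat, negp, Defs.Delta. pose proof (a_pos n); pose proof (b_pos n).
  pose proof (pow_odd_mul_bound k _ _ k_pos (min0_diff_mul_nonneg (u n) (u (n + 1)%Z)) (min0_lipschitz _ _)).
  destruct (min0_dominated (u n)) as [G1 G2]. pose proof (pow_odd_mul_bound k _ _ k_pos G1 G2).
  rewrite <- (pow_odd_mul_min0 k (u n) k_pos). split; nra.
Qed.

Lemma energy_pos_density_nonneg u n : 0 <= energy_pos_density u n.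
Proof.
  pose proof (energy_pos_density_bounds u n). pose proof (b_pos n).
  pose proof (pow_pnat_nonneg (posp u n)). nra.
Qed.

Lemma energy_neg_density_nonneg u n : 0 <= energy_neg_density u n.
Proof.
  pose proof (energy_neg_density_bounds u n). pose proof (b_pos n).
  pose proof (pow_pnat_nonneg (negp u n)). nra.
Qed.

Lemma energy_pos_summable u : finite_energy u -> exZ (energy_pos_density u).
Proof.
  intros H; apply exZ_le with (energy_density u); auto.
  intros n; split; [apply energy_pos_density_nonneg|apply energy_pos_density_bounds].
Qed.

Lemma energy_neg_summable u : finite_energy u -> exZ (energy_neg_density u).
Proof.
  intros H; apply exZ_le with (energy_density u); auto.
  intros n; split; [apply energy_neg_density_nonneg|apply energy_neg_density_bounds].
Qed.

Lemma Delta_posp_negp u n : Defs.Delta u n = Defs.Delta (posp u) n + Defs.Delta (negp u) n.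
Proof.
  unfold Defs.Delta, posp, negp.
  pose proof (max0_plus_min0 (u n)); pose proof (max0_plus_min0 (u (n + 1)%Z)). lra.
Qed.

Lemma posp_plus_negp u n : posp u n + negp u n = u n.
Proof. apply max0_plus_min0. Qed.

Lemma energy_density_split u n : energy_density u n = energy_pos_density u n + energy_neg_density u n.
Proof.
  unfold energy_density, energy_pos_density, energy_neg_density, pnat.
  rewrite <- (pow_odd_mul (Defs.Delta u n) k k_pos), <- (pow_odd_mul (u n) k k_pos).
  transitivity (a n * Defs.Delta u n ^ (2 * k - 1) * (Defs.Delta (posp u) n + Defs.Delta (negp u) n)
    + b n * u n ^ (2 * k - 1) * (posp u n + negp u n)).
  - rewrite <- Delta_posp_negp, posp_plus_negp. ring.
  - ring.
Qed.

Lemma energy_split u : finite_energy u -> energy u = energy_pos u + energy_neg u.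
Proof.
  intros H. unfold energy, energy_pos, energy_neg.
  rewrite <- sumZ_plus by (apply energy_pos_summable || apply energy_neg_summable; auto).
  apply sumZ_ext, energy_density_split.
Qed.

Lemma log_mass_split u : finite_energy u -> log_mass u = log_mass (posp u) + log_mass (negp u).
Proof.
  intros H. unfold log_mass. rewrite <- sumZ_plus.
  - apply sumZ_ext; intros n; unfold log_density, posp, negp, Rmax, Rmin.
    destruct (Rle_dec (u n) 0); rewrite abs_pow_ln_0; ring.
  - apply (finite_energy_summable u (posp u) H (posp_abs_le u)).
  - apply (finite_energy_summable u (negp u) H (negp_abs_le u)).
Qed.

Lemma logterm_log_density u n : logterm q r c u n = log_density u n.
Proof. unfold logterm, log_density, abs_pow_ln. ring. Qed.

Lemma normE_p_energy_density u n : normE_p p a b u n = energy_density u n.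
Proof. unfold normE_p, energy_density, pnat. rewrite p_even, !rpow_even by auto. reflexivity. Qed.

Lemma rpow_p_sub2_mul x y : rpow (Rabs x) (p - 2) * x * y = x ^ (pnat - 1) * y.
Proof. rewrite p_even, rpow_even_sub2 by auto. reflexivity. Qed.

Lemma dI_energy_term (u v : Z -> R) n :
  a n * rpow (Rabs (Defs.Delta u n)) (p - 2) * Defs.Delta u n * Defs.Delta v n
  + b n * rpow (Rabs (u n)) (p - 2) * u n * v n
  = a n * Defs.Delta u n ^ (pnat - 1) * Defs.Delta v n + b n * u n ^ (pnat - 1) * v n.
Proof.
  rewrite !Rmult_assoc, <- (Rmult_assoc (rpow _ _) (Defs.Delta u n)), <- (Rmult_assoc (rpow _ (p - 2)) (u n)).
  rewrite !rpow_p_sub2_mul. ring.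
Qed.

Lemma dI_log_term (u : Z -> R) (f : R -> R) n : (f (u n) = 0 \/ f (u n) = u n) ->
  c n * rpow (Rabs (u n)) (q - 2) * u n * f (u n) * lnabs r (u n) = log_density (fun m => f (u m)) n.
Proof.
  unfold log_density, abs_pow_ln. intros [E|E]; rewrite E.
  - rewrite rpow_abs0. ring.
  - rewrite <- (rpow_sub2_mul q (u n)). ring.
Qed.

Lemma dI_self u : dI p q r a b c u u = energy u - log_mass u.
Proof.
  unfold dI, energy, log_mass. f_equal; apply sumZ_ext; intros n.
  - rewrite dI_energy_term. unfold energy_density, pnat.
    rewrite <- (pow_odd_mul (Defs.Delta u n) k k_pos), <- (pow_odd_mul (u n) k k_pos). ring.
  - apply (dI_log_term u (fun x => x)). auto.
Qed.

Lemma dI_posp u : dI p q r a b c u (posp u) = energy_pos u - log_mass (posp u).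
Proof.
  unfold dI, energy_pos, log_mass. f_equal; apply sumZ_ext; intros n.
  - apply dI_energy_term.
  - apply (dI_log_term u (fun x => Rmax x 0)). unfold Rmax. destruct (Rle_dec (u n) 0); auto.
Qed.

Lemma dI_negp u : dI p q r a b c u (negp u) = energy_neg u - log_mass (negp u).
Proof.
  unfold dI, energy_neg, log_mass. f_equal; apply sumZ_ext; intros n.
  - apply dI_energy_term.
  - apply (dI_log_term u (fun x => Rmin x 0)). unfold Rmin. destruct (Rle_dec (u n) 0); auto.
Qed.

Lemma rpow_root_p x : 0 <= x -> rpow (rpow x (1 / p)) p = x.
Proof.
  intros H. destruct (Req_dec x 0) as [->|E]; [rewrite !rpow_0; reflexivity|].
  rewrite (rpow_pos x), rpow_pos by (apply Rpower_pos || lra).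
  rewrite Rpower_mult. replace (1 / p * p) with 1 by (pose proof p_ge_2; field; lra). apply Rpower_1; lra.
Qed.

Lemma inD_iff u : inD p q r a b c u <-> finite_energy u.
Proof.
  unfold inD, inE, finite_energy. split; [intros [H _]; revert H; apply exZ_ext, normE_p_energy_density|].
  intros H. split; [revert H; apply exZ_ext; intros; rewrite normE_p_energy_density; auto|].
  destruct (finite_energy_summable u u H (fun n => Rle_refl _)) as [_ [_ E]].
  revert E; apply exZ_ext; intros; rewrite logterm_log_density; auto.
Qed.

Lemma Ifun_finite_energy u : finite_energy u ->
  Ifun p q r a b c u = energy u / p + beta * mass u - log_mass u / q.
Proof.
  intros H. unfold Ifun, normE.
  rewrite (sumZ_ext (normE_p p a b u) (energy_density u)) by apply normE_p_energy_density.
  rewrite (sumZ_ext (logterm q r c u) (log_density u)) by apply logterm_log_density.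
  rewrite rpow_root_p by (apply energy_nonneg, H).
  unfold energy, mass, log_mass, beta, mass_density, abs_pow, Rdiv. ring.
Qed.

Lemma Mset_iff u : Mset p q r a b c u <->
  Mrel u /\ energy_pos u = log_mass (posp u) /\ energy_neg u = log_mass (negp u).
Proof.
  unfold Mset, Mrel. rewrite inD_iff, dI_posp, dI_negp. split.
  - intros (HE & Hp & Hn & E1 & E2).
    refine (conj (conj HE (conj Hp (conj Hn (conj _ _)))) (conj _ _)); lra.
  - intros ((HE & Hp & Hn & _) & E1 & E2). refine (conj HE (conj Hp (conj Hn (conj _ _)))); lra.
Qed.

Lemma Nset_iff u : Nset p q r a b c u <-> Nrel u /\ energy u = log_mass u.
Proof.
  unfold Nset, Nrel. rewrite inD_iff, dI_self. split.
  - intros (HE & Hu & E). refine (conj (conj HE (conj Hu _)) _); lra.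
  - intros ((HE & Hu & _) & E). refine (conj HE (conj Hu _)); lra.
Qed.

Lemma Ifun_Mset u : Mset p q r a b c u -> Ifun p q r a b c u = Ired u.
Proof.
  intros [[HE _] [E1 E2]]%Mset_iff.
  rewrite Ifun_finite_energy, (log_mass_split u HE) by auto. unfold Ired, alpha.
  rewrite (energy_split u HE). unfold Rdiv. rewrite <- E1, <- E2. ring.
Qed.

Lemma Ifun_Nset u : Nset p q r a b c u -> Ifun p q r a b c u = Ired u.
Proof.
  intros [[HE _] E]%Nset_iff.
  rewrite Ifun_finite_energy by auto. unfold Ired, alpha, Rdiv. rewrite <- E. ring.
Qed.

Lemma Mrel_energy_pos_le u : Mrel u -> energy_pos u <= log_mass (posp u).
Proof. intros (_ & _ & _ & H & _). exact H. Qed.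

Lemma Mrel_energy_neg_le u : Mrel u -> energy_neg u <= log_mass (negp u).
Proof. intros (_ & _ & _ & _ & H). exact H. Qed.

Lemma Mrel_Nrel u : Mrel u -> Nrel u.
Proof.
  intros [HE [H1 [H2 [H3 H4]]]]. split; [auto|split].
  - intros E. apply H1. apply functional_extensionality; intros n.
    unfold posp. rewrite E. apply Rmax_left; lra.
  - rewrite energy_split, log_mass_split by auto. lra.
Qed.

Lemma log_mass_pos_large_value v : exZ (log_density v) -> 0 < log_mass v -> exists n, 1 < Rabs (v n).
Proof.
  intros Hex Hpos. apply NNPP. intros Hno.
  assert (Hle : forall n, log_density v n <= 0).
  { intros n. assert (Hn : Rabs (v n) <= 1) by (apply Rnot_lt_le; intros H; apply Hno; exists n; auto).
    destruct (abs_pow_ln_small q r q_ge_2 r_nonneg (v n) Hn). pose proof (c_pos n).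
    unfold log_density. nra. }
  pose proof (sumZ_le _ _ Hle Hex exZ_0). rewrite (sumZ_0 (fun _ => 0)) in H by auto.
  unfold log_mass in Hpos. lra.
Qed.

(* [log_mass v > 0] forces some [|v n| > 1], since the logarithmic terms with [|v n| <= 1] are [<= 0];
   that single term already gives [b0 <= b n * v n ^ p <= E]. *)
Lemma log_mass_ge_b0_of v E : exZ (log_density v) -> v <> (fun _ => 0) ->
  (forall n, b n * v n ^ pnat <= E) -> E <= log_mass v -> b0 <= log_mass v.
Proof.
  intros Hex Hv Hb HE. apply fun_neq_0 in Hv. destruct Hv as [n0 Hn0].
  assert (Hpos : 0 < log_mass v).
  { specialize (Hb n0). pose proof (b_pos n0). pose proof (pow_pnat_pos _ Hn0). nra. }
  destruct (log_mass_pos_large_value v Hex Hpos) as [m Hm].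
  specialize (Hb m). pose proof (pow_pnat_ge_1 (v m) (Rlt_le _ _ Hm)). pose proof (b_ge_b0 m). nra.
Qed.

Lemma log_mass_posp_ge_b0 u : Mrel u -> b0 <= log_mass (posp u).
Proof.
  intros [HE [Hp [_ [HSP _]]]].
  apply (log_mass_ge_b0_of _ (energy_pos u)); auto.
  - apply (finite_energy_summable u (posp u) HE (posp_abs_le u)).
  - intros n. eapply Rle_trans; [apply energy_pos_density_bounds|].
    apply term_le_sumZ; [apply energy_pos_density_nonneg|apply energy_pos_summable, HE].
Qed.

Lemma log_mass_negp_ge_b0 u : Mrel u -> b0 <= log_mass (negp u).
Proof.
  intros [HE [_ [Hn [_ HSM]]]].
  apply (log_mass_ge_b0_of _ (energy_neg u)); auto.
  - apply (finite_energy_summable u (negp u) HE (negp_abs_le u)).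
  - intros n. eapply Rle_trans; [apply energy_neg_density_bounds|].
    apply term_le_sumZ; [apply energy_neg_density_nonneg|apply energy_neg_summable, HE].
Qed.

Lemma log_mass_ge_b0 u : Nrel u -> b0 <= log_mass u.
Proof.
  intros [HE [Hu HAL]].
  apply (log_mass_ge_b0_of _ (energy u)); auto.
  - apply (finite_energy_summable u u HE (fun n => Rle_refl _)).
  - intros n. eapply Rle_trans; [apply energy_density_ge|].
    apply term_le_sumZ; [apply energy_density_nonneg|apply HE].
Qed.

Section Limit.
Variable w : nat -> Z -> R.
Variable u : Z -> R.
Variable K : R.
Hypothesis w_finite : forall j, finite_energy (w j).
Hypothesis w_energy_le : forall j, energy (w j) <= K.
Hypothesis w_lim : forall n, is_lim_seq (fun j => w j n) (u n).

Definition sup_bound : R := Rmax 1 (K / b0).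

Lemma sup_bound_ge_1 : 1 <= sup_bound.
Proof. apply Rmax_l. Qed.

Lemma w_sup_bound j n : Rabs (w j n) <= sup_bound.
Proof.
  eapply Rle_trans; [apply finite_energy_sup_bound; auto|]. apply Rle_max_compat_l.
  unfold Rdiv. apply Rmult_le_compat_r; [left; apply Rinv_0_lt_compat; auto|auto].
Qed.

Lemma Delta_lim (f : R -> R) n :
  (forall (x : nat -> R) (l : R), is_lim_seq x l -> is_lim_seq (fun j => f (x j)) (f l)) ->
  is_lim_seq (fun j => Defs.Delta (fun m => f (w j m)) n) (Defs.Delta (fun m => f (u m)) n).
Proof. intros Hf. unfold Defs.Delta. apply is_lim_seq_minus'; apply Hf, w_lim. Qed.

Lemma energy_density_lim n : is_lim_seq (fun j => energy_density (w j) n) (energy_density u n).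
Proof.
  unfold energy_density. apply is_lim_seq_plus'; apply is_lim_seq_scal_l_R; apply is_lim_seq_pow; auto.
  apply (Delta_lim (fun x => x)); auto.
Qed.

Lemma energy_pos_density_lim n : is_lim_seq (fun j => energy_pos_density (w j) n) (energy_pos_density u n).
Proof.
  unfold energy_pos_density. apply is_lim_seq_plus'; apply is_lim_seq_mult'.
  - apply is_lim_seq_scal_l_R, is_lim_seq_pow, (Delta_lim (fun x => x)); auto.
  - apply (Delta_lim (fun x => Rmax x 0)), is_lim_seq_max0.
  - apply is_lim_seq_scal_l_R, is_lim_seq_pow; auto.
  - apply is_lim_seq_max0; auto.
Qed.

Lemma energy_neg_density_lim n : is_lim_seq (fun j => energy_neg_density (w j) n) (energy_neg_density u n).
Proof.
  unfold energy_neg_density. apply is_lim_seq_plus'; apply is_lim_seq_mult'.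
  - apply is_lim_seq_scal_l_R, is_lim_seq_pow, (Delta_lim (fun x => x)); auto.
  - apply (Delta_lim (fun x => Rmin x 0)), is_lim_seq_min0.
  - apply is_lim_seq_scal_l_R, is_lim_seq_pow; auto.
  - apply is_lim_seq_min0; auto.
Qed.

Lemma mass_lim : is_lim_seq (fun j => mass (w j)) (mass u).
Proof.
  apply (dominated_convergence_sumZ _ _ (fun n => c n * Rpower sup_bound q)).
  - intros j n. apply (bounded_densities_dominated (w j) sup_bound sup_bound_ge_1 (w_sup_bound j)).
  - apply exZ_c_const.
  - intros n. apply is_lim_seq_scal_l_R, is_lim_seq_abs_pow; auto using q_ge_2.
Qed.

Lemma log_mass_comp_lim (f : R -> R) : (forall x, Rabs (f x) <= Rabs x) ->
  (forall (x : nat -> R) (l : R), is_lim_seq x l -> is_lim_seq (fun j => f (x j)) (f l)) ->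
  is_lim_seq (fun j => log_mass (fun n => f (w j n))) (log_mass (fun n => f (u n))).
Proof.
  intros Hf Hfl. apply (dominated_convergence_sumZ _ _ (fun n => c n * log_bound_const sup_bound)).
  - intros j n. apply (bounded_densities_dominated _ sup_bound sup_bound_ge_1).
    intros m. eapply Rle_trans; [apply Hf|apply w_sup_bound].
  - apply exZ_c_const.
  - intros n. apply is_lim_seq_scal_l_R, is_lim_seq_abs_pow_ln; auto using q_ge_2, r_nonneg.
Qed.

Lemma log_mass_lim : is_lim_seq (fun j => log_mass (w j)) (log_mass u).
Proof. apply (log_mass_comp_lim (fun x => x)); auto. intros; lra. Qed.

Lemma log_mass_posp_lim : is_lim_seq (fun j => log_mass (posp (w j))) (log_mass (posp u)).
Proof. apply (log_mass_comp_lim (fun x => Rmax x 0)); [apply max0_dominated|apply is_lim_seq_max0]. Qed.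

Lemma log_mass_negp_lim : is_lim_seq (fun j => log_mass (negp (w j))) (log_mass (negp u)).
Proof. apply (log_mass_comp_lim (fun x => Rmin x 0)); [apply min0_dominated|apply is_lim_seq_min0]. Qed.

Lemma energy_fatou (Kj : nat -> R) (Kl : R) :
  (forall j, energy (w j) <= Kj j) -> is_lim_seq Kj Kl -> finite_energy u /\ energy u <= Kl.
Proof.
  intros H1 H2. apply (fatou_sumZ (fun j => energy_density (w j)) _ Kj); auto.
  - intros; apply energy_density_nonneg.
  - apply energy_density_lim.
Qed.

Lemma energy_pos_fatou (Kj : nat -> R) (Kl : R) :
  (forall j, energy_pos (w j) <= Kj j) -> is_lim_seq Kj Kl -> energy_pos u <= Kl.
Proof.
  intros H1 H2. apply (fatou_sumZ (fun j => energy_pos_density (w j)) _ Kj); auto.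
  - intros; apply energy_pos_density_nonneg.
  - apply energy_pos_density_lim.
  - intros; apply energy_pos_summable; auto.
Qed.

Lemma energy_neg_fatou (Kj : nat -> R) (Kl : R) :
  (forall j, energy_neg (w j) <= Kj j) -> is_lim_seq Kj Kl -> energy_neg u <= Kl.
Proof.
  intros H1 H2. apply (fatou_sumZ (fun j => energy_neg_density (w j)) _ Kj); auto.
  - intros; apply energy_neg_density_nonneg.
  - apply energy_neg_density_lim.
  - intros; apply energy_neg_summable; auto.
Qed.

End Limit.

(** * Shrinking, scaling and symmetry *)

Lemma same_sign_parts u n : same_sign (posp u n) (negp u n).
Proof. apply same_sign_max0_min0. Qed.

Lemma same_sign_Delta_parts u n : same_sign (Defs.Delta (posp u) n) (Defs.Delta (negp u) n).
Proof. apply same_sign_max0_min0_diff. Qed.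

Definition shrink_pos (s : R) (u : Z -> R) : Z -> R := fun n => s * posp u n + negp u n.

Section ShrinkPos.
Variables (s : R) (u : Z -> R).
Hypothesis s_range : 0 < s <= 1.

Lemma posp_shrink_pos n : posp (shrink_pos s u) n = s * posp u n.
Proof. apply max0_shrink; lra. Qed.

Lemma negp_shrink_pos : negp (shrink_pos s u) = negp u.
Proof. apply functional_extensionality; intros n. apply min0_shrink; lra. Qed.

Lemma Delta_shrink_pos n :
  Defs.Delta (shrink_pos s u) n = s * Defs.Delta (posp u) n + Defs.Delta (negp u) n.
Proof. unfold Defs.Delta, shrink_pos. ring. Qed.

Lemma energy_density_shrink_pos_le n : energy_density (shrink_pos s u) n <= energy_density u n.
Proof.
  pose proof (pow_even_shrink_le k s _ _ ltac:(lra) (same_sign_Delta_parts u n)) as H1.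
  pose proof (pow_even_shrink_le k s _ _ ltac:(lra) (same_sign_parts u n)) as H2.
  rewrite <- Delta_posp_negp, <- Delta_shrink_pos in H1. rewrite posp_plus_negp in H2.
  unfold energy_density, pnat. pose proof (a_pos n); pose proof (b_pos n).
  apply Rplus_le_compat; apply Rmult_le_compat_l; auto; lra.
Qed.

Lemma energy_pos_density_shrink_pos_le n :
  energy_pos_density (shrink_pos s u) n <= s * energy_pos_density u n.
Proof.
  destruct (pow_odd_shrink_le k s _ _ k_pos ltac:(lra) (same_sign_Delta_parts u n)) as [H1 _].
  destruct (pow_odd_shrink_le k s _ _ k_pos ltac:(lra) (same_sign_parts u n)) as [H2 _].
  rewrite <- Delta_posp_negp, <- Delta_shrink_pos in H1. rewrite posp_plus_negp in H2.
  unfold energy_pos_density, pnat.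
  replace (Defs.Delta (posp (shrink_pos s u)) n) with (s * Defs.Delta (posp u) n)
    by (unfold Defs.Delta; rewrite !posp_shrink_pos; ring).
  rewrite posp_shrink_pos. pose proof (a_pos n); pose proof (b_pos n).
  assert (0 <= a n * s) by nra. assert (0 <= b n * s) by nra.
  apply Rmult_le_compat_l with (r := a n * s) in H1; auto.
  apply Rmult_le_compat_l with (r := b n * s) in H2; auto.
  unfold shrink_pos in *. nra.
Qed.

Lemma energy_neg_density_shrink_pos_le n :
  energy_neg_density (shrink_pos s u) n <= energy_neg_density u n.
Proof.
  destruct (pow_odd_shrink_le k s _ _ k_pos ltac:(lra) (same_sign_Delta_parts u n)) as [_ H1].
  destruct (pow_odd_shrink_le k s _ _ k_pos ltac:(lra) (same_sign_parts u n)) as [_ H2].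
  rewrite <- Delta_posp_negp, <- Delta_shrink_pos in H1. rewrite posp_plus_negp in H2.
  unfold energy_neg_density, pnat. rewrite negp_shrink_pos.
  pose proof (a_pos n); pose proof (b_pos n).
  apply Rplus_le_compat; rewrite !Rmult_assoc; apply Rmult_le_compat_l; auto; lra.
Qed.

Lemma mass_density_shrink_pos_le n : mass_density (shrink_pos s u) n <= mass_density u n.
Proof.
  unfold mass_density. apply Rmult_le_compat_l; [left; apply c_pos|].
  apply abs_pow_le; [apply q_ge_2|].
  rewrite <- (posp_plus_negp u n). apply Rabs_shrink_le; [lra|apply same_sign_parts].
Qed.

Lemma mass_density_shrink_pos_lt n : 0 < u n -> s < 1 -> mass_density (shrink_pos s u) n < mass_density u n.
Proof.
  intros Hu Hs1. unfold mass_density, shrink_pos, posp, negp.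
  rewrite Rmax_left, Rmin_right, Rplus_0_r by lra.
  apply Rmult_lt_compat_l; [apply c_pos|]. apply abs_pow_lt; [apply q_ge_2|nra|].
  rewrite Rabs_mult, !Rabs_right by lra. nra.
Qed.

Lemma log_density_posp_shrink_pos n : log_density (posp (shrink_pos s u)) n =
  Rpower s q * (log_density (posp u) n + r * ln s * mass_density (posp u) n).
Proof.
  unfold log_density, mass_density. rewrite posp_shrink_pos, abs_pow_ln_scale by lra. ring.
Qed.

Hypothesis u_finite : finite_energy u.

Lemma finite_energy_shrink_pos : finite_energy (shrink_pos s u).
Proof.
  apply exZ_le with (energy_density u); auto.
  intros n; split; [apply energy_density_nonneg|apply energy_density_shrink_pos_le].
Qed.

Lemma energy_shrink_pos_le : energy (shrink_pos s u) <= energy u.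
Proof.
  apply sumZ_le; [apply energy_density_shrink_pos_le|apply finite_energy_shrink_pos|apply u_finite].
Qed.

Lemma energy_pos_shrink_pos_le : energy_pos (shrink_pos s u) <= s * energy_pos u.
Proof.
  unfold energy_pos. rewrite <- sumZ_scal. apply sumZ_le.
  - apply energy_pos_density_shrink_pos_le.
  - apply energy_pos_summable, finite_energy_shrink_pos.
  - apply exZ_scal, energy_pos_summable, u_finite.
Qed.

Lemma energy_neg_shrink_pos_le : energy_neg (shrink_pos s u) <= energy_neg u.
Proof.
  apply sumZ_le; [apply energy_neg_density_shrink_pos_le| |];
    apply energy_neg_summable; auto using finite_energy_shrink_pos.
Qed.

Lemma log_mass_posp_shrink_pos : log_mass (posp (shrink_pos s u)) =
  Rpower s q * (log_mass (posp u) + r * ln s * mass (posp u)).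
Proof.
  destruct (finite_energy_summable u (posp u) u_finite (posp_abs_le u)) as [EB [EL _]].
  unfold log_mass, mass. rewrite (sumZ_ext _ _ log_density_posp_shrink_pos).
  rewrite sumZ_scal, sumZ_plus, sumZ_scal; auto. apply exZ_scal, EB.
Qed.

Lemma Ired_shrink_pos_lt : s < 1 -> posp u <> (fun _ => 0) -> Ired (shrink_pos s u) < Ired u.
Proof.
  intros Hs1 Hp. apply fun_neq_0 in Hp. destruct Hp as [n0 Hn0].
  assert (Hu0 : 0 < u n0) by (unfold posp, Rmax in Hn0; destruct (Rle_dec (u n0) 0); lra).
  assert (mass (shrink_pos s u) < mass u).
  { apply (sumZ_lt _ _ n0 mass_density_shrink_pos_le (mass_density_shrink_pos_lt n0 Hu0 Hs1));
      [apply (finite_energy_summable u (shrink_pos s u) u_finite)|apply (finite_energy_summable u u u_finite)];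
      auto using Rle_refl.
    intros n. rewrite <- (posp_plus_negp u n). apply Rabs_shrink_le; [lra|apply same_sign_parts]. }
  unfold Ired. pose proof energy_shrink_pos_le. pose proof alpha_pos; pose proof beta_pos. nra.
Qed.

End ShrinkPos.

Lemma Mrel_shrink_pos u : Mrel u -> energy_pos u < log_mass (posp u) -> exists w, Mrel w /\ Ired w < Ired u.
Proof.
  intros (HE & Hp & Hn & _ & HSM) Hlt.
  destruct (scaling_below_one q r _ _ (mass (posp u)) 1 Hlt) as [s [Hs Hsc]]. rewrite pow_1 in Hsc.
  assert (Hs1 : 0 < s <= 1) by lra.
  exists (shrink_pos s u). split; [|apply Ired_shrink_pos_lt; auto; lra].
  split; [apply finite_energy_shrink_pos; auto|split; [|split; [|split]]].
  - apply fun_neq_0 in Hp. destruct Hp as [n0 Hn0]. apply fun_neq_0. exists n0.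
    rewrite posp_shrink_pos by auto. apply Rmult_integral_contrapositive; split; lra.
  - rewrite negp_shrink_pos by auto. exact Hn.
  - rewrite log_mass_posp_shrink_pos by auto. pose proof (energy_pos_shrink_pos_le s u Hs1 HE). lra.
  - rewrite negp_shrink_pos by auto. pose proof (energy_neg_shrink_pos_le s u Hs1 HE). lra.
Qed.

Definition scale (s : R) (u : Z -> R) : Z -> R := fun n => s * u n.

Section Scale.
Variables (s : R) (u : Z -> R).
Hypothesis s_pos : 0 < s.
Hypothesis u_finite : finite_energy u.

Lemma energy_density_scale n : energy_density (scale s u) n = s ^ pnat * energy_density u n.
Proof.
  unfold energy_density, scale, Defs.Delta.
  replace (s * u (n + 1)%Z - s * u n) with (s * (u (n + 1)%Z - u n)) by ring.
  rewrite !Rpow_mult_distr. ring.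
Qed.

Lemma finite_energy_scale : finite_energy (scale s u).
Proof.
  apply (exZ_ext (fun n => s ^ pnat * energy_density u n)); [|apply exZ_scal, u_finite].
  intros; rewrite energy_density_scale; auto.
Qed.

Lemma energy_scale : energy (scale s u) = s ^ pnat * energy u.
Proof. unfold energy. rewrite <- sumZ_scal. apply sumZ_ext, energy_density_scale. Qed.

Lemma mass_scale : mass (scale s u) = Rpower s q * mass u.
Proof.
  unfold mass. rewrite <- sumZ_scal. apply sumZ_ext; intros n.
  unfold mass_density, scale. rewrite abs_pow_scale; auto. ring.
Qed.

Lemma log_mass_scale : log_mass (scale s u) = Rpower s q * (log_mass u + r * ln s * mass u).
Proof.
  destruct (finite_energy_summable u u u_finite (fun n => Rle_refl _)) as [EB [EL _]].
  unfold log_mass, mass. rewrite <- (sumZ_scal (r * ln s)), <- sumZ_plus by (auto; apply exZ_scal, EB).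
  rewrite <- sumZ_scal. apply sumZ_ext; intros n.
  unfold log_density, mass_density, scale. rewrite abs_pow_ln_scale; auto. ring.
Qed.

End Scale.

Lemma Nrel_shrink u : Nrel u -> energy u < log_mass u -> exists w, Nrel w /\ Ired w < Ired u.
Proof.
  intros (HE & Hu & _) Hlt.
  destruct (scaling_below_one q r _ _ (mass u) pnat Hlt) as [s [Hs Hsc]].
  assert (Hsq : Rpower s q < 1).
  { unfold Rpower. rewrite <- exp_0. apply exp_increasing.
    assert (ln s < 0) by (rewrite <- ln_1; apply ln_increasing; lra). pose proof q_ge_2. nra. }
  assert (HsP : s ^ pnat <= 1) by (rewrite <- (pow1 pnat); apply pow_incr; lra).
  exists (scale s u). split.
  - split; [apply finite_energy_scale; auto; lra|split].
    + apply fun_neq_0 in Hu. destruct Hu as [n0 Hn0]. apply fun_neq_0. exists n0.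
      unfold scale. apply Rmult_integral_contrapositive; split; lra.
    + rewrite energy_scale, log_mass_scale by (auto; lra). exact Hsc.
  - unfold Ired. rewrite energy_scale, mass_scale by lra.
    pose proof alpha_pos; pose proof beta_pos; pose proof (energy_nonneg u HE); pose proof (mass_pos u HE Hu).
    pose proof (pow_le s pnat ltac:(lra)).
    assert (s ^ pnat * energy u <= energy u) by nra. assert (Rpower s q * mass u < mass u) by nra.
    apply Rplus_le_lt_compat; [apply Rmult_le_compat_l|apply Rmult_lt_compat_l]; lra.
Qed.

Definition oppf (u : Z -> R) : Z -> R := fun n => - u n.

Lemma posp_oppf u : posp (oppf u) = oppf (negp u).
Proof.
  apply functional_extensionality; intros n. unfold posp, negp, oppf.
  destruct (Rle_dec (u n) 0); [rewrite Rmin_left, Rmax_left|rewrite Rmin_right, Rmax_right]; lra.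
Qed.

Lemma negp_oppf u : negp (oppf u) = oppf (posp u).
Proof.
  apply functional_extensionality; intros n. unfold posp, negp, oppf.
  destruct (Rle_dec (u n) 0); [rewrite Rmin_right, Rmax_right|rewrite Rmin_left, Rmax_left]; lra.
Qed.

Lemma Delta_oppf u n : Defs.Delta (oppf u) n = - Defs.Delta u n.
Proof. unfold Defs.Delta, oppf. ring. Qed.

Lemma energy_density_oppf u n : energy_density (oppf u) n = energy_density u n.
Proof. unfold energy_density, pnat. rewrite Delta_oppf. unfold oppf. rewrite !pow_even_neg. reflexivity. Qed.

Lemma energy_pos_density_oppf u n : energy_pos_density (oppf u) n = energy_neg_density u n.
Proof.
  unfold energy_pos_density, energy_neg_density, pnat. rewrite posp_oppf, !Delta_oppf.
  unfold oppf. rewrite !pow_odd_neg by auto. ring.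
Qed.

Lemma energy_neg_density_oppf u n : energy_neg_density (oppf u) n = energy_pos_density u n.
Proof.
  unfold energy_pos_density, energy_neg_density, pnat. rewrite negp_oppf, !Delta_oppf.
  unfold oppf. rewrite !pow_odd_neg by auto. ring.
Qed.

Lemma log_mass_oppf u : log_mass (oppf u) = log_mass u.
Proof. apply sumZ_ext; intros n. unfold log_density, oppf. rewrite abs_pow_ln_opp. reflexivity. Qed.

Lemma mass_oppf u : mass (oppf u) = mass u.
Proof. apply sumZ_ext; intros n. unfold mass_density, oppf. rewrite abs_pow_opp. reflexivity. Qed.

Lemma Mrel_oppf u : Mrel u -> Mrel (oppf u) /\ Ired (oppf u) = Ired u /\
  energy_pos (oppf u) = energy_neg u /\ log_mass (posp (oppf u)) = log_mass (negp u).
Proof.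
  intros (HE & Hp & Hn & HSP & HSM).
  assert (EA : energy (oppf u) = energy u) by (apply sumZ_ext, energy_density_oppf).
  assert (ESP : energy_pos (oppf u) = energy_neg u) by (apply sumZ_ext, energy_pos_density_oppf).
  assert (ESM : energy_neg (oppf u) = energy_pos u) by (apply sumZ_ext, energy_neg_density_oppf).
  unfold Mrel. rewrite posp_oppf, negp_oppf, !log_mass_oppf.
  assert (Hopp0 : forall v, v <> (fun _ => 0) -> oppf v <> (fun _ => 0)).
  { intros v Hv E. apply Hv, functional_extensionality; intros n.
    apply (f_equal (fun f => f n)) in E. unfold oppf in E. lra. }
  refine (conj (conj _ (conj (Hopp0 _ Hn) (conj (Hopp0 _ Hp) (conj _ _)))) (conj _ (conj ESP eq_refl))).
  - revert HE. apply exZ_ext. intros; rewrite energy_density_oppf; auto.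
  - lra.
  - lra.
  - unfold Ired. rewrite EA, mass_oppf. reflexivity.
Qed.

Lemma Mrel_shrink_neg u : Mrel u -> energy_neg u < log_mass (negp u) -> exists w, Mrel w /\ Ired w < Ired u.
Proof.
  intros HM Hlt. destruct (Mrel_oppf u HM) as (HM' & EI & ESP & ELp).
  destruct (Mrel_shrink_pos (oppf u) HM') as [w [Hw Hj]]; [lra|].
  exists w; split; auto. lra.
Qed.

Lemma large_log_dominates (C m0 : R) : 0 <= C -> 0 < m0 ->
  exists T, 0 < T /\ C * T ^ pnat <= m0 * abs_pow_ln q r T.
Proof.
  intros HC Hm0.
  assert (Hd : 0 < m0 * r * (q - p)) by (apply Rmult_lt_0_compat; [apply Rmult_lt_0_compat|]; lra).
  set (t := Rmax 1 (C / (m0 * r * (q - p)))).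
  assert (Ht1 : 1 <= t) by apply Rmax_l.
  assert (HCt : C <= m0 * r * (q - p) * t).
  { pose proof (Rmax_r 1 (C / (m0 * r * (q - p)))) as Ht. fold t in Ht.
    apply Rmult_le_compat_l with (r := m0 * r * (q - p)) in Ht; [|lra].
    replace (m0 * r * (q - p) * (C / (m0 * r * (q - p)))) with C in Ht by (field; lra). exact Ht. }
  assert (HX : q - p <= exp ((q - p) * t)) by (pose proof (exp_ineq1_le ((q - p) * t)); nra).
  assert (Hsplit : exp (q * t) = exp t ^ pnat * exp ((q - p) * t)).
  { rewrite <- (Rpower_pow pnat (exp t)) by apply exp_pos. unfold Rpower. rewrite ln_exp, <- exp_plus.
    unfold pnat. rewrite <- p_even. f_equal; ring. }
  exists (exp t). split; [apply exp_pos|].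
  rewrite abs_pow_ln_exp, Rabs_right, ln_exp, Hsplit by (pose proof (exp_pos t); lra).
  pose proof (pow_lt (exp t) pnat (exp_pos t)). pose proof (exp_pos ((q - p) * t)).
  assert (C <= m0 * (exp ((q - p) * t) * (r * t))).
  { eapply Rle_trans; [apply HCt|].
    replace (m0 * r * (q - p) * t) with (m0 * r * t * (q - p)) by ring.
    replace (m0 * (exp ((q - p) * t) * (r * t))) with (m0 * r * t * exp ((q - p) * t)) by ring.
    apply Rmult_le_compat_l; [|exact HX]. apply Rmult_le_pos; [apply Rmult_le_pos|]; lra. }
  replace (m0 * (exp t ^ pnat * exp ((q - p) * t) * (r * t)))
    with (exp t ^ pnat * (m0 * (exp ((q - p) * t) * (r * t)))) by ring.
  rewrite Rmult_comm. apply Rmult_le_compat_l; lra.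
Qed.

Definition dipole (T : R) : Z -> R := fun n => if Z.eq_dec n 0 then T else if Z.eq_dec n 1 then - T else 0.

Lemma dipole_outside T n : n <> 0%Z -> n <> 1%Z -> dipole T n = 0.
Proof. intros H0 H1. unfold dipole. destruct (Z.eq_dec n 0); [lia|]. destruct (Z.eq_dec n 1); [lia|auto]. Qed.

Lemma dipole_abs_le T n : 0 <= T -> Rabs (dipole T n) <= T.
Proof.
  intros HT. unfold dipole. destruct (Z.eq_dec n 0); [rewrite Rabs_right; lra|].
  destruct (Z.eq_dec n 1); [rewrite Rabs_Ropp, Rabs_right; lra|rewrite Rabs_R0; lra].
Qed.

Lemma energy_dipole_le T : 0 <= T ->
  finite_energy (dipole T) /\ energy (dipole T) <= 2 ^ pnat * partial_sumZ (fun n => a n + b n) 1 * T ^ pnat.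
Proof.
  intros HT. assert (HP : (0 < pnat)%nat) by (unfold pnat; lia).
  destruct (sumZ_finite_support (energy_density (dipole T)) 1) as [EA SA].
  { intros n Hn. unfold energy_density, Defs.Delta. rewrite !dipole_outside by lia.
    rewrite Rminus_0_r, !pow_i by auto. ring. }
  split; [exact EA|]. unfold energy. rewrite SA.
  assert (Hterm : forall n, energy_density (dipole T) n <= (2 * T) ^ pnat * (a n + b n)).
  { intros n. unfold energy_density. pose proof (a_pos n); pose proof (b_pos n).
    pose proof (dipole_abs_le T n HT); pose proof (dipole_abs_le T (n + 1) HT).
    assert (HD : Rabs (Defs.Delta (dipole T) n) <= Rabs (2 * T)).
    { rewrite (Rabs_right (2 * T)) by lra. unfold Defs.Delta.
      eapply Rle_trans; [apply Rabs_triang|]. rewrite Rabs_Ropp. lra. }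
    assert (HV : Rabs (dipole T n) <= Rabs (2 * T)) by (rewrite (Rabs_right (2 * T)); lra).
    unfold pnat in *. pose proof (pow_even_mono _ _ k HD). pose proof (pow_even_mono _ _ k HV). nra. }
  replace (2 ^ pnat * partial_sumZ (fun n => a n + b n) 1 * T ^ pnat)
    with (partial_sumZ (fun n => (2 * T) ^ pnat * (a n + b n)) 1).
  - unfold partial_sumZ. apply Rplus_le_compat; apply sum_n_le_pointwise; intros; apply Hterm.
  - rewrite partial_sumZ_scal, Rpow_mult_distr. ring.
Qed.

Lemma log_mass_posp_dipole T : 0 < T -> log_mass (posp (dipole T)) = c 0%Z * abs_pow_ln q r T.
Proof.
  intros HT. destruct (sumZ_finite_support (log_density (posp (dipole T))) 0) as [_ S].
  { intros n Hn. unfold log_density, posp.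
    replace (Rmax (dipole T n) 0) with 0; [rewrite abs_pow_ln_0; ring|].
    destruct (Z.eq_dec n 1) as [->|]; [unfold dipole; simpl|rewrite dipole_outside by lia];
      rewrite Rmax_right; lra. }
  unfold log_mass. rewrite S. unfold partial_sumZ, right_half, left_half. rewrite !sum_O.
  unfold log_density, posp, dipole. simpl. rewrite Rmax_left, Rmax_right, abs_pow_ln_0 by lra. ring.
Qed.

Lemma log_mass_negp_dipole T : 0 < T -> log_mass (negp (dipole T)) = c 1%Z * abs_pow_ln q r T.
Proof.
  intros HT. destruct (sumZ_finite_support (log_density (negp (dipole T))) 1) as [_ S].
  { intros n Hn. unfold log_density, negp. rewrite dipole_outside, Rmin_left, abs_pow_ln_0 by (lia || lra). ring. }
  unfold log_mass. rewrite S. unfold partial_sumZ, right_half, left_half. rewrite !sum_n_succ, !sum_O.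
  unfold log_density, negp, dipole. simpl.
  rewrite (Rmin_right T 0), (Rmin_left (- T) 0), (Rmin_left 0 0), abs_pow_ln_0, abs_pow_ln_opp by lra. ring.
Qed.

Lemma energy_pos_le_energy u : finite_energy u -> energy_pos u <= energy u.
Proof.
  intros HE. rewrite (energy_split u HE).
  pose proof (sumZ_nonneg _ (energy_neg_density_nonneg u) (energy_neg_summable u HE)). unfold energy_neg. lra.
Qed.

Lemma energy_neg_le_energy u : finite_energy u -> energy_neg u <= energy u.
Proof.
  intros HE. rewrite (energy_split u HE).
  pose proof (sumZ_nonneg _ (energy_pos_density_nonneg u) (energy_pos_summable u HE)). unfold energy_pos. lra.
Qed.

(* A tall dipole [T, -T] has energy of order [T^p] but logarithmic mass of order [T^q ln T], with [q > p]. *)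
Lemma Mrel_nonempty : exists u, Mrel u.
Proof.
  set (C := 2 ^ pnat * partial_sumZ (fun n => a n + b n) 1).
  assert (HC : 0 <= C).
  { apply Rmult_le_pos; [apply pow_le; lra|].
    apply Rplus_le_le_0_compat; apply sum_n_nonneg; intros; pose proof (a_pos 0); unfold right_half, left_half;
      apply Rplus_le_le_0_compat; left; auto. }
  set (m0 := Rmin (c 0%Z) (c 1%Z)).
  assert (Hm0 : 0 < m0) by (apply Rmin_pos; apply c_pos).
  destruct (large_log_dominates C m0 HC Hm0) as [T [HT HTb]].
  destruct (energy_dipole_le T ltac:(lra)) as [HE HA].
  assert (HCT : 0 <= C * T ^ pnat) by (apply Rmult_le_pos; [|apply pow_le]; lra).
  assert (HL : 0 <= abs_pow_ln q r T) by (apply Rmult_le_reg_l with m0; lra).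
  assert (H0 : m0 * abs_pow_ln q r T <= c 0%Z * abs_pow_ln q r T) by (apply Rmult_le_compat_r, Rmin_l; lra).
  assert (H1 : m0 * abs_pow_ln q r T <= c 1%Z * abs_pow_ln q r T) by (apply Rmult_le_compat_r, Rmin_r; lra).
  pose proof (energy_pos_le_energy _ HE). pose proof (energy_neg_le_energy _ HE).
  exists (dipole T). split; [exact HE|split; [|split; [|split]]].
  - apply fun_neq_0. exists 0%Z. unfold posp, dipole. simpl. rewrite Rmax_left; lra.
  - apply fun_neq_0. exists 1%Z. unfold negp, dipole. simpl. rewrite Rmin_left; lra.
  - rewrite log_mass_posp_dipole by lra. fold C in HA. lra.
  - rewrite log_mass_negp_dipole by lra. fold C in HA. lra.
Qed.

(** * Minimization *)

Lemma log_mass_0 : log_mass (fun _ => 0) = 0.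
Proof. apply sumZ_0. intros; unfold log_density; rewrite abs_pow_ln_0; ring. Qed.

Lemma Ired_pos u : finite_energy u -> u <> (fun _ => 0) -> 0 < Ired u.
Proof.
  intros HE Hu. unfold Ired. pose proof alpha_pos; pose proof beta_pos.
  pose proof (energy_nonneg u HE); pose proof (mass_pos u HE Hu).
  apply Rplus_le_lt_0_compat; [apply Rmult_le_pos|apply Rmult_lt_0_compat]; lra.
Qed.

Lemma alpha_mul_div x : alpha * (x / alpha) = x.
Proof. pose proof alpha_pos. field. lra. Qed.

Lemma energy_le_of_Ired u M : finite_energy u -> Ired u <= M -> energy u <= M / alpha.
Proof.
  intros HE HM. pose proof alpha_pos; pose proof beta_pos.
  assert (0 <= mass u).
  { apply sumZ_nonneg; [apply mass_density_nonneg|apply (finite_energy_summable u u HE (fun n => Rle_refl _))]. }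
  apply Rmult_le_reg_l with alpha; auto. rewrite alpha_mul_div.
  unfold Ired in HM. nra.
Qed.

Lemma minimizing_limit (w : nat -> Z -> R) (u0 : Z -> R) (m K : R) :
  (forall j, finite_energy (w j)) -> (forall j, energy (w j) <= K) ->
  (forall n, is_lim_seq (fun j => w j n) (u0 n)) ->
  (forall j, Ired (w j) <= m + / (INR j + 1)) -> finite_energy u0 /\ Ired u0 <= m.
Proof.
  intros Hw HK Hl HJ. pose proof alpha_pos.
  destruct (energy_fatou w u0 Hw Hl (fun j => (m + / (INR j + 1) - beta * mass (w j)) / alpha)
    ((m - beta * mass u0) / alpha)) as [HE HA].
  - intros j. specialize (HJ j). unfold Ired in HJ.
    apply Rmult_le_reg_l with alpha; auto. rewrite alpha_mul_div. lra.
  - unfold Rdiv. apply is_lim_seq_mult'; [|apply is_lim_seq_const].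
    replace (m - beta * mass u0) with (m + 0 - beta * mass u0) by ring.
    apply is_lim_seq_minus'; [apply is_lim_seq_plus'; [apply is_lim_seq_const|apply is_lim_seq_inv_succ]|].
    apply is_lim_seq_scal_l_R, (mass_lim w u0 K Hw HK Hl).
  - split; auto. unfold Ired. apply Rmult_le_compat_l with (r := alpha) in HA; [|lra].
    rewrite alpha_mul_div in HA. lra.
Qed.

Lemma minimizing_sequence_converges (S : (Z -> R) -> Prop) :
  (forall v, S v -> finite_energy v) -> (exists v, S v) ->
  exists (m K : R) (w : nat -> Z -> R) (u0 : Z -> R),
    (forall v, S v -> m <= Ired v) /\ (forall j, S (w j)) /\ (forall j, energy (w j) <= K) /\
    (forall n, is_lim_seq (fun j => w j n) (u0 n)) /\ finite_energy u0 /\ Ired u0 <= m.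
Proof.
  intros HSE [v0 Hv0].
  destruct (nonneg_infimum (fun y => exists v, S v /\ y = Ired v)) as [m [Hm0 [Hlow Happrox]]].
  { exists (Ired v0), v0; auto. }
  { intros y [v [Hv ->]]. apply Ired_nonneg; auto. }
  assert (Hseq : forall j : nat, exists v, S v /\ Ired v < m + / (INR j + 1)).
  { intros j. destruct (Happrox _ (inv_succ_pos j)) as [y [[v [Hv ->]] Hy]]. exists v; auto. }
  destruct (choice _ Hseq) as [v Hv].
  set (K := (m + 1) / alpha).
  assert (HvK : forall j, energy (v j) <= K).
  { intros j. apply energy_le_of_Ired; [apply HSE, Hv|].
    destruct (Hv j) as [_ HJ]. pose proof (inv_succ_pos j).
    assert (/ (INR j + 1) <= 1)
      by (rewrite <- Rinv_1; apply Rinv_le_contravar; pose proof (pos_INR j); lra). lra. }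
  assert (HvE : forall j, finite_energy (v j)) by (intros j; apply HSE, Hv).
  destruct (bounded_pointwise_cluster v (sup_bound K) (w_sup_bound v K HvE HvK)) as [u0 [phi [Hphi Hlim]]].
  assert (HJ : forall j, Ired (v (phi j)) <= m + / (INR j + 1)).
  { intros j. destruct (Hv (phi j)) as [_ HJ]. left. eapply Rlt_le_trans; [apply HJ|].
    apply Rplus_le_compat_l, Rinv_le_contravar; [pose proof (pos_INR j); lra|].
    apply Rplus_le_compat_r, le_INR, Hphi. }
  destruct (minimizing_limit (fun j => v (phi j)) u0 m K (fun j => HvE _) (fun j => HvK _) Hlim HJ) as [HE HJ0].
  exists m, K, (fun j => v (phi j)), u0.
  refine (conj _ (conj (fun j => proj1 (Hv (phi j))) (conj (fun j => HvK _) (conj Hlim (conj HE HJ0))))).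
  intros w Hw. apply Hlow. exists w; auto.
Qed.

Lemma Mrel_minimizer : exists u0, Mrel u0 /\ energy_pos u0 = log_mass (posp u0) /\
  energy_neg u0 = log_mass (negp u0) /\ (forall v, Mrel v -> Ired u0 <= Ired v) /\ 0 < Ired u0.
Proof.
  destruct (minimizing_sequence_converges Mrel (fun v Hv => proj1 Hv) Mrel_nonempty)
    as (m & K & w & u0 & Hm & HS & HK & Hl & HE & HJ).
  assert (Hw : forall j, finite_energy (w j)) by (intros; apply HS).
  pose proof (log_mass_posp_lim w u0 K Hw HK Hl) as Lp.
  pose proof (log_mass_negp_lim w u0 K Hw HK Hl) as Lm.
  assert (HSP : energy_pos u0 <= log_mass (posp u0)).
  { apply (energy_pos_fatou w u0 Hw Hl _ _ (fun j => Mrel_energy_pos_le _ (HS j)) Lp). }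
  assert (HSM : energy_neg u0 <= log_mass (negp u0)).
  { apply (energy_neg_fatou w u0 Hw Hl _ _ (fun j => Mrel_energy_neg_le _ (HS j)) Lm). }
  pose proof (is_lim_seq_ge_const _ _ _ (fun j => log_mass_posp_ge_b0 _ (HS j)) Lp) as Bp.
  pose proof (is_lim_seq_ge_const _ _ _ (fun j => log_mass_negp_ge_b0 _ (HS j)) Lm) as Bm.
  assert (HM : Mrel u0).
  { refine (conj HE (conj _ (conj _ (conj HSP HSM)))); intros E; rewrite E, log_mass_0 in *; lra. }
  assert (Hmin : forall v, Mrel v -> Ired u0 <= Ired v) by (intros v Hv; specialize (Hm v Hv); lra).
  exists u0. refine (conj HM (conj _ (conj _ (conj Hmin _)))).
  - destruct (Rle_lt_or_eq_dec _ _ HSP) as [Hlt|]; auto. exfalso.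
    destruct (Mrel_shrink_pos u0 HM Hlt) as [w' [Hw' Hj']]. specialize (Hmin w' Hw'). lra.
  - destruct (Rle_lt_or_eq_dec _ _ HSM) as [Hlt|]; auto. exfalso.
    destruct (Mrel_shrink_neg u0 HM Hlt) as [w' [Hw' Hj']]. specialize (Hmin w' Hw'). lra.
  - apply Ired_pos; [exact HE|apply (Mrel_Nrel u0 HM)].
Qed.

Lemma Nrel_minimizer : exists u0, Nrel u0 /\ energy u0 = log_mass u0 /\
  (forall v, Nrel v -> Ired u0 <= Ired v) /\ 0 < Ired u0.
Proof.
  assert (Hex : exists v, Nrel v) by (destruct Mrel_nonempty as [v Hv]; exists v; apply Mrel_Nrel, Hv).
  destruct (minimizing_sequence_converges Nrel (fun v Hv => proj1 Hv) Hex)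
    as (m & K & w & u0 & Hm & HS & HK & Hl & HE & HJ).
  assert (Hw : forall j, finite_energy (w j)) by (intros; apply HS).
  pose proof (log_mass_lim w u0 K Hw HK Hl) as L.
  assert (HAL : energy u0 <= log_mass u0).
  { apply (energy_fatou w u0 Hw Hl _ _ (fun j => proj2 (proj2 (HS j))) L). }
  pose proof (is_lim_seq_ge_const _ _ _ (fun j => log_mass_ge_b0 _ (HS j)) L) as B.
  assert (HN : Nrel u0).
  { refine (conj HE (conj _ HAL)); intros E; rewrite E, log_mass_0 in B; lra. }
  assert (Hmin : forall v, Nrel v -> Ired u0 <= Ired v) by (intros v Hv; specialize (Hm v Hv); lra).
  exists u0. refine (conj HN (conj _ (conj Hmin _))).
  - destruct (Rle_lt_or_eq_dec _ _ HAL) as [Hlt|]; auto. exfalso.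
    destruct (Nrel_shrink u0 HN Hlt) as [w' [Hw' Hj']]. specialize (Hmin w' Hw'). lra.
  - apply Ired_pos; [exact HE|apply HN].
Qed.

Lemma Mset_minimizer : exists u0, Mset p q r a b c u0 /\
  (forall u, Mset p q r a b c u -> Ifun p q r a b c u0 <= Ifun p q r a b c u) /\ 0 < Ifun p q r a b c u0.
Proof.
  destruct Mrel_minimizer as (u0 & HM & E1 & E2 & Hmin & Hpos).
  assert (HMs : Mset p q r a b c u0) by (apply Mset_iff; auto).
  exists u0. rewrite (Ifun_Mset u0 HMs). refine (conj HMs (conj _ Hpos)).
  intros u Hu. rewrite (Ifun_Mset u Hu). apply Hmin, (proj1 (proj1 (Mset_iff u) Hu)).
Qed.

Lemma Nset_minimizer : exists u0, Nset p q r a b c u0 /\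
  (forall u, Nset p q r a b c u -> Ifun p q r a b c u0 <= Ifun p q r a b c u) /\ 0 < Ifun p q r a b c u0.
Proof.
  destruct Nrel_minimizer as (u0 & HN & E & Hmin & Hpos).
  assert (HNs : Nset p q r a b c u0) by (apply Nset_iff; auto).
  exists u0. rewrite (Ifun_Nset u0 HNs). refine (conj HNs (conj _ Hpos)).
  intros u Hu. rewrite (Ifun_Nset u Hu). apply Hmin, (proj1 (proj1 (Nset_iff u) Hu)).
Qed.

End Functional.

Theorem lemma2p9 (p q r : R) (a b c : Z -> R)
  (Hp : 1 < p) (Hpq : p < q) (Hp2 : exists k : nat, (0 < k)%nat /\ p / 2 = INR k)
  (Hr : 1 <= r)
  (Ha : forall n, 0 < a n) (Hb : forall n, 0 < b n) (Hc : forall n, 0 < c n)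
  (HC1 : condC1 b) (HC2 : condC2 c) :
  (exists u0, Mset p q r a b c u0 /\
     (forall u, Mset p q r a b c u -> Ifun p q r a b c u0 <= Ifun p q r a b c u) /\
     0 < Ifun p q r a b c u0) /\
  (exists ubar, Nset p q r a b c ubar /\
     (forall u, Nset p q r a b c u -> Ifun p q r a b c ubar <= Ifun p q r a b c u) /\
     0 < Ifun p q r a b c ubar).
Proof.
  destruct Hp2 as [k [Hk Hpk]].
  destruct HC1 as [[b0 [Hb0 Hbb]] _].
  destruct HC2 as [_ Hcs].
  assert (Hp_even : p = INR (2 * k)) by (rewrite mult_INR; simpl; lra).
  assert (Hr_pos : 0 < r) by lra.
  split; [apply (Mset_minimizer p q r a b c k b0)|apply (Nset_minimizer p q r a b c k b0)]; auto.
Qed.
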